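(* Let $p$ be a prime and let $A\in\mathrm{GL}_2(\mathbb{Z}[1/p])$ be conjugate in $\mathrm{GL}_2(\mathbb{Z}[1/p])$ to $\mathrm{diag}(p,1/p)$. Then the group $G_p=(\mathbb{Z}[1/p])^2\rtimes_A\mathbb{Z}$ acts geometrically (properly discontinuously and coboundedly) on the horocyclic product $\mathbb{H}^2_p[p]\bowtie\mathbb{H}^2_p[p]$ of two mixed millefeuille spaces.
   Context: $\mathbb{H}^2_p$ is the Heintze group $\mathbb{R}\rtimes_{p^t}\mathbb{R}$ with the left-invariant Riemannian metric that is Euclidean at the origin (a hyperbolic plane of curvature $-(\ln p)^2$), with Busemann function $\beta(x,t)=-t$. $T_p$ is the $(p+1)$-regular tree with a Busemann function about a fixed end. The millefeuille space is $\mathbb{H}^2_p[p]=\{(x,v)\in\mathbb{H}^2_p\times T_p:\beta(x)=\beta_T(v)\}$ (it is a proper $\mathrm{CAT}(-\kappa)$ space with a distinguished boundary point and Busemann function). For two such spaces with Busemann functions $\beta_1,\beta_2$, the horocyclic product is $\{(x,y):\beta_1(x)=-\beta_2(y)\}$, with the path metric induced by an admissible monotone norm on the pair of coordinate distances. *)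

From Stdlib Require Import Reals Lra ZArith Znumtheory List Sorted.
From Coquelicot Require Import Rbar Lub.
Open Scope R_scope.

Definition in_Zinvp (p : Z) (x : R) : Prop :=
  exists (z : Z) (k : nat), x = IZR z / (IZR p) ^ k.

Definition in_pkZ (p k : Z) (x : R) : Prop :=
  exists z : Z, x = IZR z * powerRZ (IZR p) k.

Record mat2 := Mat2 { m11 : R; m12 : R; m21 : R; m22 : R }.

Definition mmul (A B : mat2) : mat2 :=
  Mat2 (m11 A * m11 B + m12 A * m21 B) (m11 A * m12 B + m12 A * m22 B)
       (m21 A * m11 B + m22 A * m21 B) (m21 A * m12 B + m22 A * m22 B).
Definition mdet (A : mat2) : R := m11 A * m22 A - m12 A * m21 A.
Definition mid : mat2 := Mat2 1 0 0 1.
Definition minv (A : mat2) : mat2 :=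
  Mat2 (m22 A / mdet A) (- m12 A / mdet A) (- m21 A / mdet A) (m11 A / mdet A).
Definition mapply (A : mat2) (v : R * R) : R * R :=
  (m11 A * fst v + m12 A * snd v, m21 A * fst v + m22 A * snd v).

Fixpoint mpow_nat (A : mat2) (n : nat) : mat2 :=
  match n with O => mid | S n' => mmul A (mpow_nat A n') end.
Definition mpowZ (A : mat2) (n : Z) : mat2 :=
  match n with
  | Z0 => mid
  | Zpos k => mpow_nat A (Pos.to_nat k)
  | Zneg k => mpow_nat (minv A) (Pos.to_nat k)
  end.

Definition in_GL2_Zinvp (p : Z) (A : mat2) : Prop :=
  in_Zinvp p (m11 A) /\ in_Zinvp p (m12 A) /\ in_Zinvp p (m21 A) /\
  in_Zinvp p (m22 A) /\ mdet A <> 0 /\ in_Zinvp p (/ mdet A).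

Definition diag_p (p : Z) : mat2 := Mat2 (IZR p) 0 0 (/ IZR p).

Definition conj_to_diag_p (p : Z) (A : mat2) : Prop :=
  exists P, in_GL2_Zinvp p P /\ A = mmul (mmul P (diag_p p)) (minv P).

Definition Gp_elt : Type := ((R * R) * Z)%type.
Definition in_Gp (p : Z) (g : Gp_elt) : Prop :=
  in_Zinvp p (fst (fst g)) /\ in_Zinvp p (snd (fst g)).
Definition Gp_mul (A : mat2) (g h : Gp_elt) : Gp_elt :=
  let w := mapply (mpowZ A (snd g)) (fst h) in
  ((fst (fst g) + fst w, snd (fst g) + snd w), (snd g + snd h)%Z).
Definition Gp_one : Gp_elt := ((0, 0), 0%Z).

Fixpoint chain_sum {T} (c : T -> T -> R) (g : R -> T) (l : list R) : R :=
  match l with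
  | t :: ((t' :: _) as rest) => c (g t) (g t') + chain_sum c g rest
  | _ => 0
  end.

Definition path_length_le {T} (c : T -> T -> R) (g : R -> T) (L : R) : Prop :=
  forall l : list R, Sorted Rle l -> Forall (fun t => 0 <= t <= 1) l ->
    chain_sum c g l <= L.

Definition cont01 {T} (d : T -> T -> R) (g : R -> T) : Prop :=
  forall s, 0 <= s <= 1 -> forall eps, 0 < eps -> exists delta, 0 < delta /\
    forall s', 0 <= s' <= 1 -> Rabs (s' - s) < delta -> d (g s) (g s') < eps.

Definition path_dist {T} (Sp : T -> Prop) (cont : (R -> T) -> Prop)
    (c : T -> T -> R) (a b : T) : R :=
  real (Glb_Rbar (fun L => exists g : R -> T,
     g 0 = a /\ g 1 = b /\ (forall s, 0 <= s <= 1 -> Sp (g s)) /\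
     cont g /\ path_length_le c g L)).

(* H^2_p = R x|_{p^t} R with the left-invariant metric Euclidean at   *)
(* the origin, i.e. ds^2 = p^{-2t} dx^2 + dt^2 (curvature -(ln p)^2). *)
Definition arcosh (z : R) : R := ln (z + sqrt (z * z - 1)).

Definition H2_pt : Type := (R * R)%type.  (* (x, t) *)
Definition H2_dist (p : Z) (a b : H2_pt) : R :=
  let u := ln (IZR p) in
  let Ya := Rpower (IZR p) (snd a) in
  let Yb := Rpower (IZR p) (snd b) in
  / u * arcosh (1 + (u ^ 2 * (fst a - fst b) ^ 2 + (Ya - Yb) ^ 2) / (2 * Ya * Yb)).
Definition H2_beta (a : H2_pt) : R := - snd a.

(* T_p : geometric realization of the (p+1)-regular tree, with a      *)
(* Busemann function about a fixed end.                               *)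
(* Vertices at height n in Z are the classes of Z[1/p] modulo p^n Z;  *)
(* the parent of (n, r) is (n-1, r mod p^(n-1) Z) (so each vertex has *)
(* one parent and p children).  A point of the realization is a pair  *)
(* (h, r) with h real and r in Z[1/p]; it lies on the edge from the   *)
(* vertex (ceil h, r) towards its parent, at height h.  Representatives*)
(* (h,r),(h,r') with r - r' in p^(ceil h) Z are the same point (they  *)
(* are at tree distance 0).  Busemann function: beta_T (h, r) = h,    *)
(* decreasing towards the fixed end.                                  *)
Definition Tree_pt : Type := (R * R)%type.
Definition in_Tree (p : Z) (v : Tree_pt) : Prop := in_Zinvp p (snd v).
Definition Tree_beta (v : Tree_pt) : R := fst v.

(* height of the confluence point of the rays from v and w to the end *)
Definition Tree_meet (p : Z) (v w : Tree_pt) : R :=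
  real (Lub_Rbar (fun g => g <= fst v /\ g <= fst w /\
          exists k : Z, g <= IZR k /\ in_pkZ p k (snd v - snd w))).
Definition Tree_dist (p : Z) (v w : Tree_pt) : R :=
  fst v + fst w - 2 * Tree_meet p v w.

(* Millefeuille space H^2_p[p] = {(x,v) : beta(x) = beta_T(v)} with   *)
(* its length metric: a continuous path (x(s), v(s)) has the length   *)
(* of its H^2_p-component x(s) (each leaf is isometric to H^2_p).     *)
Definition MF_pt : Type := (H2_pt * Tree_pt)%type.
Definition in_MF (p : Z) (a : MF_pt) : Prop :=
  in_Tree p (snd a) /\ H2_beta (fst a) = Tree_beta (snd a).
Definition MF_beta (a : MF_pt) : R := H2_beta (fst a).
Definition MF_cont (p : Z) (g : R -> MF_pt) : Prop :=
  cont01 (H2_dist p) (fun s => fst (g s)) /\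
  cont01 (Tree_dist p) (fun s => snd (g s)).
Definition MF_dist (p : Z) (a b : MF_pt) : R :=
  path_dist (in_MF p) (MF_cont p) (fun x y => H2_dist p (fst x) (fst y)) a b.

Definition is_norm2 (N : R -> R -> R) : Prop :=
  (forall a b, 0 <= N a b) /\
  (forall a b, N a b = 0 -> a = 0 /\ b = 0) /\
  (forall l a b, N (l * a) (l * b) = Rabs l * N a b) /\
  (forall a b a' b', N (a + a') (b + b') <= N a b + N a' b').
Definition monotone_norm2 (N : R -> R -> R) : Prop :=
  is_norm2 N /\
  forall a b a' b', 0 <= a <= a' -> 0 <= b <= b' -> N a b <= N a' b'.

Definition HP_pt : Type := (MF_pt * MF_pt)%type.
Definition in_HP (p : Z) (z : HP_pt) : Prop :=
  in_MF p (fst z) /\ in_MF p (snd z) /\ MF_beta (fst z) = - MF_beta (snd z).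
Definition HP_cont (p : Z) (g : R -> HP_pt) : Prop :=
  cont01 (MF_dist p) (fun s => fst (g s)) /\
  cont01 (MF_dist p) (fun s => snd (g s)).
Definition HP_dist (p : Z) (N : R -> R -> R) (z w : HP_pt) : R :=
  path_dist (in_HP p) (HP_cont p)
    (fun x y => N (MF_dist p (fst x) (fst y)) (MF_dist p (snd x) (snd y))) z w.

(* Geometric (isometric, properly discontinuous, cobounded) action of *)
(* a group (carrier predicate inG, product mul, unit e) on a          *)
(* (pseudo)metric space (carrier predicate inX, distance d).  Points  *)
(* at distance 0 are identified, so the action laws are required up  *)
(* to distance 0.                                                     *)
Definition geometric_action {G X : Type} (inG : G -> Prop) (mul : G -> G -> G)
    (e : G) (inX : X -> Prop) (d : X -> X -> R) (act : G -> X -> X) : Prop :=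
  (forall g x, inG g -> inX x -> inX (act g x)) /\
  (forall x, inX x -> d (act e x) x = 0) /\
  (forall g h x, inG g -> inG h -> inX x ->
      d (act (mul g h) x) (act g (act h x)) = 0) /\
  (forall g x y, inG g -> inX x -> inX y -> d (act g x) (act g y) = d x y) /\
  (* properly discontinuous: for each ball B, finitely many g with gB meeting B *)
  (forall x r, inX x -> exists lg : list G, forall g, inG g ->
      (exists y, inX y /\ d x y <= r /\ d x (act g y) <= r) -> In g lg) /\
  (exists x0 R0, inX x0 /\ forall y, inX y -> exists g, inG g /\ d y (act g x0) <= R0).

(* After conjugating by [P], an element [(v, n)] of [G_p] with [w = P^-1 v] acts
   by [(x, t) |-> (p^n x + w1, t + n)] and [r |-> p^-n r + w2] on the leaves and
   the tree of the first millefeuille factor, and by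
   [(x, t) |-> (p^-n x + w2, t - n)] and [r |-> p^n r + w1] on the second one.
   These are isometries of [H^2_p] and automorphisms of [T_p] respecting the
   horocyclic constraints, hence isometries of the path metric.

   Proper discontinuity: along a path of bounded length in a millefeuille space
   the height moves by a bounded amount, so the tree coordinate is constant
   modulo some [p^K Z] and the [x]-coordinate moves by a bounded amount.  An
   element moving a point of a ball back into the ball therefore has bounded [n]
   and translation part [w] in a bounded subset of a lattice [p^Q Z^2].

   Coboundedness: every point is joined to the orbit of a base point by
   a zigzag path of bounded length that raises the height, switches the first
   tree branch, lowers the height and switches the second tree branch. *)

From Stdlib Require Import Reals Lra Lia ZArith Znumtheory List Sorted Classical.
From Coquelicot Require Import Rcomplements Rbar Lub.
Open Scope R_scope.

Section PathMetric.

Context {T : Type} (Sp : T -> Prop) (cont : (R -> T) -> Prop) (c : T -> T -> R).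

Definition admissible_length (a b : T) (L : R) : Prop :=
  exists g : R -> T,
    g 0 = a /\ g 1 = b /\ (forall s, 0 <= s <= 1 -> Sp (g s)) /\
    cont g /\ path_length_le c g L.

Lemma admissible_length_nonneg a b L : admissible_length a b L -> 0 <= L.
Proof. intros [g (_ & _ & _ & _ & HL)]. apply (HL nil); constructor. Qed.

Lemma Glb_admissible_length a b L :
  admissible_length a b L ->
  Glb_Rbar (admissible_length a b) = Finite (path_dist Sp cont c a b).
Proof.
  intro HL. unfold path_dist. fold (admissible_length a b).
  destruct (Glb_Rbar_correct (admissible_length a b)) as [Hlb Hglb].
  assert (H0 : Rbar_le 0 (Glb_Rbar (admissible_length a b))).
  { apply Hglb. intros x Hx. simpl. eapply admissible_length_nonneg; eauto. }
  assert (H1 : Rbar_le (Glb_Rbar (admissible_length a b)) L) by (apply Hlb; auto).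
  destruct (Glb_Rbar (admissible_length a b)); simpl in *; auto; contradiction.
Qed.

Lemma path_dist_le a b L : admissible_length a b L -> path_dist Sp cont c a b <= L.
Proof.
  intro HL. destruct (Glb_Rbar_correct (admissible_length a b)) as [Hlb _].
  specialize (Hlb L HL). rewrite (Glb_admissible_length a b L HL) in Hlb. exact Hlb.
Qed.

Lemma path_dist_nonneg a b : 0 <= path_dist Sp cont c a b.
Proof.
  unfold path_dist. fold (admissible_length a b).
  destruct (Glb_Rbar_correct (admissible_length a b)) as [_ Hglb].
  assert (H0 : Rbar_le 0 (Glb_Rbar (admissible_length a b))).
  { apply Hglb. intros x Hx. simpl. eapply admissible_length_nonneg; eauto. }
  destruct (Glb_Rbar (admissible_length a b)); simpl in *; lra.
Qed.

Lemma path_dist_ge a b B :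
  (exists L, admissible_length a b L) ->
  (forall L, admissible_length a b L -> B <= L) -> B <= path_dist Sp cont c a b.
Proof.
  intros [L0 HL0] HB. destruct (Glb_Rbar_correct (admissible_length a b)) as [_ Hglb].
  assert (H : Rbar_le B (Glb_Rbar (admissible_length a b))).
  { apply Hglb. intros x Hx. simpl. auto. }
  rewrite (Glb_admissible_length a b L0 HL0) in H. exact H.
Qed.

Lemma path_dist_approx a b eps :
  (exists L, admissible_length a b L) -> 0 < eps ->
  exists L, admissible_length a b L /\ L < path_dist Sp cont c a b + eps.
Proof.
  intros Hne Heps.
  destruct (classic (exists L, admissible_length a b L /\ L < path_dist Sp cont c a b + eps))
    as [H | H]; auto.
  exfalso.
  assert (path_dist Sp cont c a b + eps <= path_dist Sp cont c a b); [|lra].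
  apply path_dist_ge; auto. intros L HL. apply Rnot_lt_le. intro HLt. eauto.
Qed.

Lemma path_dist_refl a : Sp a -> cont (fun _ => a) -> c a a = 0 -> path_dist Sp cont c a a = 0.
Proof.
  intros Ha Hc Hcc. apply Rle_antisym; [|apply path_dist_nonneg].
  apply path_dist_le. exists (fun _ => a). repeat split; auto.
  intros l _ _. induction l as [|x l IH]; simpl; [lra|].
  destruct l; [lra|]. rewrite Hcc. lra.
Qed.

Lemma chain_sum_lipschitz (g : R -> T) K :
  0 <= K ->
  (forall a b, 0 <= a <= 1 -> 0 <= b <= 1 -> c (g a) (g b) <= K * Rabs (b - a)) ->
  path_length_le c g K.
Proof.
  intros HK Hc.
  assert (Hgen : forall l a, Sorted Rle (a :: l) -> Forall (fun t => 0 <= t <= 1) (a :: l) ->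
            chain_sum c g (a :: l) <= K * (1 - a)).
  { induction l as [|b l IH]; intros a Hs Hf.
    - simpl. inversion Hf; subst. apply Rmult_le_pos; lra.
    - change (chain_sum c g (a :: b :: l)) with (c (g a) (g b) + chain_sum c g (b :: l)).
      destruct (Sorted_inv Hs) as [Hs1 Hs2]. apply HdRel_inv in Hs2.
      pose proof (Forall_inv Hf) as Ha. pose proof (Forall_inv_tail Hf) as Hf1.
      pose proof (Forall_inv Hf1) as Hb.
      pose proof (IH b Hs1 Hf1) as Hi.
      pose proof (Hc a b Ha Hb) as Hab. rewrite Rabs_right in Hab by lra.
      nra. }
  intros l Hs Hf. destruct l as [|a l]; simpl; [lra|].
  pose proof (Hgen l a Hs Hf). pose proof (Forall_inv Hf). simpl in *. nra.
Qed.

Lemma path_length_le_endpoints g L : path_length_le c g L -> c (g 0) (g 1) <= L.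
Proof.
  intro H. specialize (H (0 :: 1 :: nil)). simpl in H.
  enough (c (g 0) (g 1) + 0 <= L) by lra.
  apply H.
  - repeat constructor. lra.
  - repeat (apply Forall_cons; [lra|]); apply Forall_nil.
Qed.

Lemma path_length_le_through g L s :
  0 <= s <= 1 -> path_length_le c g L -> c (g 0) (g s) + c (g s) (g 1) <= L.
Proof.
  intros Hs H. specialize (H (0 :: s :: 1 :: nil)). simpl in H.
  enough (c (g 0) (g s) + (c (g s) (g 1) + 0) <= L) by lra.
  apply H.
  - apply Sorted_cons; [apply Sorted_cons; [apply Sorted_cons; constructor|]|];
      constructor; lra.
  - repeat (apply Forall_cons; [lra|]); apply Forall_nil.
Qed.

Definition preserves_paths (f : T -> T) : Prop :=
  (forall x, Sp x -> Sp (f x)) /\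
  (forall x y, Sp x -> Sp y -> c (f x) (f y) = c x y) /\
  (forall g, (forall s, 0 <= s <= 1 -> Sp (g s)) -> cont g -> cont (fun s => f (g s))).

Lemma admissible_length_map f a b L :
  preserves_paths f -> admissible_length a b L -> admissible_length (f a) (f b) L.
Proof.
  intros (HS & Hc & Hcont) [g (H0 & H1 & Hs & Hg & Hl)].
  assert (Hchain : forall l, Forall (fun t => 0 <= t <= 1) l ->
            chain_sum c (fun s => f (g s)) l = chain_sum c g l).
  { induction l as [|t l IH]; intro Hf; simpl; auto.
    destruct l as [|t' l]; auto.
    pose proof (Forall_inv Hf) as Ht. pose proof (Forall_inv_tail Hf) as Hf1.
    rewrite Hc by (apply Hs; auto; exact (Forall_inv Hf1)). f_equal. apply IH; auto. }
  exists (fun s => f (g s)). repeat split.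
  - rewrite H0; auto.
  - rewrite H1; auto.
  - intros s Hs'. apply HS; auto.
  - apply Hcont; auto.
  - intros l Hsl Hfl. rewrite Hchain by auto. apply Hl; auto.
Qed.

Lemma path_dist_invariant f f' a b :
  preserves_paths f -> preserves_paths f' -> (forall x, f' (f x) = x) ->
  path_dist Sp cont c (f a) (f b) = path_dist Sp cont c a b.
Proof.
  intros Hf Hf' Hff. unfold path_dist. f_equal. apply Glb_Rbar_eqset. intro L. split; intro H.
  - rewrite <- (Hff a), <- (Hff b). apply admissible_length_map; auto.
  - apply admissible_length_map; auto.
Qed.

End PathMetric.

Lemma cont01_isometry {T} (d : T -> T -> R) (S : T -> Prop) (f : T -> T) (g : R -> T) :
  (forall x y, S x -> S y -> d (f x) (f y) = d x y) -> (forall s, 0 <= s <= 1 -> S (g s)) ->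
  cont01 d g -> cont01 d (fun s => f (g s)).
Proof.
  intros Hf Hg Hc s Hs eps Heps. destruct (Hc s Hs eps Heps) as [del [Hdel H]].
  exists del. split; auto. intros s' Hs' Hss. rewrite Hf by auto. auto.
Qed.

Lemma lipschitz_cont01 {T} (d : T -> T -> R) (f : R -> T) K :
  0 <= K ->
  (forall a b, 0 <= a <= 1 -> 0 <= b <= 1 -> d (f a) (f b) <= K * Rabs (a - b)) ->
  cont01 d f.
Proof.
  intros HK H s Hs eps Heps. exists (eps / (K + 1)). split.
  - apply Rdiv_lt_0_compat; lra.
  - intros s' Hs' Hss. eapply Rle_lt_trans; [apply H; auto|].
    rewrite Rabs_minus_sym. apply Rlt_div_r in Hss; [|lra].
    pose proof (Rabs_pos (s' - s)). nra.
Qed.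

Lemma cont01_reparam {T} (d : T -> T -> R) f s s' :
  0 <= s <= 1 -> 0 <= s' <= 1 ->
  cont01 d f -> cont01 d (fun t => f (s + t * (s' - s))).
Proof.
  intros Hs Hs' Hc t Ht eps Heps.
  destruct (Hc (s + t * (s' - s)) ltac:(nra) eps Heps) as [del [Hdel H]].
  exists (del / (Rabs (s' - s) + 1)). split.
  - apply Rdiv_lt_0_compat; auto. pose proof (Rabs_pos (s' - s)); lra.
  - intros t' Ht' Htt. apply H; [nra|].
    replace (s + t' * (s' - s) - (s + t * (s' - s))) with ((t' - t) * (s' - s)) by ring.
    rewrite Rabs_mult. pose proof (Rabs_pos (s' - s)). pose proof (Rabs_pos (t' - t)).
    apply Rlt_div_r in Htt; [|lra]. nra.
Qed.

Section PadicArithmetic.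

Variable p : Z.
Hypothesis Hp : prime p.

Lemma IZR_prime_gt1 : 1 < IZR p.
Proof. apply IZR_lt. pose proof (prime_ge_2 p Hp). lia. Qed.

Lemma IZR_prime_neq0 : IZR p <> 0.
Proof. pose proof IZR_prime_gt1. lra. Qed.

Lemma powerRZ_prime_pos k : 0 < powerRZ (IZR p) k.
Proof. apply powerRZ_lt. pose proof IZR_prime_gt1. lra. Qed.

Lemma powerRZ_prime_opp_l k : powerRZ (IZR p) (- k) * powerRZ (IZR p) k = 1.
Proof.
  rewrite <- powerRZ_add by exact IZR_prime_neq0. replace (- k + k)%Z with 0%Z by lia.
  reflexivity.
Qed.

Lemma in_pkZ_0 k : in_pkZ p k 0.
Proof. exists 0%Z. ring. Qed.

Lemma in_pkZ_add k x y : in_pkZ p k x -> in_pkZ p k y -> in_pkZ p k (x + y).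
Proof. intros [a ->] [b ->]. exists (a + b)%Z. rewrite plus_IZR. ring. Qed.

Lemma in_pkZ_opp k x : in_pkZ p k x -> in_pkZ p k (- x).
Proof. intros [a ->]. exists (- a)%Z. rewrite opp_IZR. ring. Qed.

Lemma in_pkZ_sub k x y : in_pkZ p k x -> in_pkZ p k y -> in_pkZ p k (x - y).
Proof. intros. apply in_pkZ_add; auto. apply in_pkZ_opp; auto. Qed.

Lemma in_pkZ_weaken k k' x : (k <= k')%Z -> in_pkZ p k' x -> in_pkZ p k x.
Proof.
  intros Hk [a ->]. exists (a * p ^ (k' - k))%Z.
  rewrite mult_IZR, <- (Z2Nat.id (k' - k)) by lia.
  rewrite <- pow_IZR, pow_powerRZ, Z2Nat.id by lia.
  rewrite Rmult_assoc, <- powerRZ_add by exact IZR_prime_neq0.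
  do 2 f_equal. lia.
Qed.

Lemma in_pkZ_mul k m x y : in_pkZ p k x -> in_pkZ p m y -> in_pkZ p (k + m) (x * y).
Proof.
  intros [a ->] [b ->]. exists (a * b)%Z. rewrite mult_IZR.
  rewrite powerRZ_add by exact IZR_prime_neq0. ring.
Qed.

Lemma in_pkZ_pow k : in_pkZ p k (powerRZ (IZR p) k).
Proof. exists 1%Z. ring. Qed.

Lemma in_pkZ_scale k m x : in_pkZ p k x -> in_pkZ p (k + m) (powerRZ (IZR p) m * x).
Proof. intro H. rewrite Z.add_comm. apply in_pkZ_mul; auto. apply in_pkZ_pow. Qed.

Lemma in_pkZ_scale_iff k m x :
  in_pkZ p k (powerRZ (IZR p) (- m) * x) <-> in_pkZ p (k + m) x.
Proof.
  split; intro H.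
  - apply (in_pkZ_scale _ m) in H.
    rewrite <- Rmult_assoc, Rmult_comm with (r1 := powerRZ _ m), powerRZ_prime_opp_l,
      Rmult_1_l in H. exact H.
  - apply (in_pkZ_scale _ (- m)) in H. replace (k + m + - m)%Z with k in H by lia. exact H.
Qed.

Lemma in_Zinvp_iff_pkZ x : in_Zinvp p x <-> exists k, in_pkZ p k x.
Proof.
  split.
  - intros [z [k ->]]. exists (- Z.of_nat k)%Z, z.
    rewrite powerRZ_neg' by exact IZR_prime_neq0. rewrite <- pow_powerRZ. unfold Rdiv. ring.
  - intros [k [a ->]]. destruct (Z_le_gt_dec 0 k) as [Hk|Hk].
    + exists (a * p ^ k)%Z, O. rewrite mult_IZR, <- (Z2Nat.id k) by lia.
      rewrite <- pow_IZR, pow_powerRZ, Z2Nat.id by lia. simpl. field.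
    + exists a, (Z.to_nat (- k)).
      replace k with (- Z.of_nat (Z.to_nat (- k)))%Z at 1 by lia.
      rewrite powerRZ_neg' by exact IZR_prime_neq0. rewrite <- pow_powerRZ. unfold Rdiv. ring.
Qed.

Lemma in_Zinvp_add x y : in_Zinvp p x -> in_Zinvp p y -> in_Zinvp p (x + y).
Proof.
  rewrite !in_Zinvp_iff_pkZ. intros [k Hk] [k' Hk']. exists (Z.min k k').
  apply in_pkZ_add; eapply in_pkZ_weaken; eauto; lia.
Qed.

Lemma in_Zinvp_opp x : in_Zinvp p x -> in_Zinvp p (- x).
Proof. rewrite !in_Zinvp_iff_pkZ. intros [k Hk]. exists k. apply in_pkZ_opp; auto. Qed.

Lemma in_Zinvp_mul x y : in_Zinvp p x -> in_Zinvp p y -> in_Zinvp p (x * y).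
Proof.
  rewrite !in_Zinvp_iff_pkZ. intros [k Hk] [k' Hk']. exists (k + k')%Z. apply in_pkZ_mul; auto.
Qed.

Lemma in_Zinvp_pow k : in_Zinvp p (powerRZ (IZR p) k).
Proof. apply in_Zinvp_iff_pkZ. exists k. apply in_pkZ_pow. Qed.

Lemma in_Zinvp_IZR z : in_Zinvp p (IZR z).
Proof. apply in_Zinvp_iff_pkZ. exists 0%Z, z. simpl. ring. Qed.

Lemma in_Zinvp_sub_pkZ x y : in_Zinvp p x -> in_Zinvp p y -> exists k, in_pkZ p k (x - y).
Proof.
  intros Hx Hy. apply in_Zinvp_iff_pkZ. apply in_Zinvp_add; auto. apply in_Zinvp_opp; auto.
Qed.

Lemma in_Zinvp_affine k x c : in_Zinvp p x -> in_Zinvp p c ->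
  in_Zinvp p (powerRZ (IZR p) k * x + c).
Proof. intros. apply in_Zinvp_add; auto. apply in_Zinvp_mul; auto. apply in_Zinvp_pow. Qed.

End PadicArithmetic.

Lemma exp_le_compat x y : x <= y -> exp x <= exp y.
Proof.
  intro H. destruct (Req_dec x y) as [->|Hne]; [lra|]. left. apply exp_increasing. lra.
Qed.

Lemma ln_le_sub1 x : 0 < x -> ln x <= x - 1.
Proof. intro H. pose proof (exp_ineq1_le (ln x)). rewrite exp_ln in H0; lra. Qed.

Lemma sqrt_add_le a b : 0 <= a -> 0 <= b -> sqrt (a + b) <= sqrt a + sqrt b.
Proof.
  intros Ha Hb. pose proof (sqrt_pos a). pose proof (sqrt_pos b).
  rewrite <- (sqrt_square (sqrt a + sqrt b)) by lra. apply sqrt_le_1_alt.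
  pose proof (sqrt_sqrt a Ha). pose proof (sqrt_sqrt b Hb). nra.
Qed.

Lemma exp_lipschitz a b : Rabs (exp a - exp b) <= Rmax (exp a) (exp b) * Rabs (a - b).
Proof.
  assert (H : forall x y, x <= y -> exp y - exp x <= exp y * (y - x)).
  { intros x y Hxy. pose proof (exp_ineq1_le (x - y)).
    replace (exp x) with (exp y * exp (x - y)) by (rewrite <- exp_plus; f_equal; ring).
    pose proof (exp_pos y). nra. }
  destruct (Rle_dec a b) as [Hab|Hab].
  - pose proof (H a b Hab). pose proof (exp_le_compat a b Hab).
    rewrite !Rabs_left1, Rmax_right by lra. lra.
  - pose proof (H b a ltac:(lra)). pose proof (exp_le_compat b a ltac:(lra)).
    rewrite !Rabs_right, Rmax_left by lra. lra.
Qed.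

Lemma arcosh_ge_ln z : 1 <= z -> ln z <= arcosh z.
Proof. intro H. unfold arcosh. apply ln_le; [lra|]. pose proof (sqrt_pos (z * z - 1)); lra. Qed.

Definition arcosh_bound (w : R) : R := 2 * w + sqrt (2 * w).

Lemma arcosh_le_bound w : 0 <= w -> arcosh (1 + w) <= arcosh_bound w.
Proof.
  intro H. unfold arcosh, arcosh_bound.
  pose proof (sqrt_pos ((1 + w) * (1 + w) - 1)).
  eapply Rle_trans; [apply ln_le_sub1; lra|].
  enough (sqrt ((1 + w) * (1 + w) - 1) <= w + sqrt (2 * w)) by lra.
  replace ((1 + w) * (1 + w) - 1) with (w * w + 2 * w) by ring.
  eapply Rle_trans; [apply sqrt_add_le; nra|]. rewrite sqrt_square by lra. lra.
Qed.

Lemma arcosh_bound_le w w' : 0 <= w <= w' -> arcosh_bound w <= arcosh_bound w'.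
Proof.
  intro H. unfold arcosh_bound.
  assert (sqrt (2 * w) <= sqrt (2 * w')) by (apply sqrt_le_1_alt; lra). lra.
Qed.

Section Hyperbolic.

Variable p : Z.
Hypothesis Hp : prime p.

Definition lnp : R := ln (IZR p).
Definition ppow (t : R) : R := Rpower (IZR p) t.

Lemma lnp_pos : 0 < lnp.
Proof. unfold lnp. rewrite <- ln_1. apply ln_increasing; [lra|]. apply IZR_prime_gt1; auto. Qed.

Lemma ppow_pos t : 0 < ppow t.
Proof. apply exp_pos. Qed.

Lemma ppow_plus a b : ppow (a + b) = ppow a * ppow b.
Proof. apply Rpower_plus. Qed.

Lemma ppow_le t t' : t <= t' -> ppow t <= ppow t'.
Proof. intro H. apply Rle_Rpower; auto. pose proof (IZR_prime_gt1 p Hp). lra. Qed.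

Lemma powerRZ_ppow k : powerRZ (IZR p) k = ppow (IZR k).
Proof. apply powerRZ_Rpower. pose proof (IZR_prime_gt1 p Hp). lra. Qed.

Lemma ppow_lipschitz t t' Ymax : ppow t <= Ymax -> ppow t' <= Ymax ->
  Rabs (ppow t - ppow t') <= lnp * Ymax * Rabs (t - t').
Proof.
  intros H1 H2. pose proof lnp_pos.
  unfold ppow, Rpower. eapply Rle_trans; [apply exp_lipschitz|].
  replace (t * ln (IZR p) - t' * ln (IZR p)) with (lnp * (t - t')) by (unfold lnp; ring).
  rewrite Rabs_mult, (Rabs_right lnp) by lra.
  assert (Rmax (ppow t) (ppow t') <= Ymax) by (apply Rmax_lub; auto).
  pose proof (Rabs_pos (t - t')). unfold ppow, Rpower in H3.
  replace (lnp * Ymax * Rabs (t - t')) with (Ymax * (lnp * Rabs (t - t'))) by ring.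
  apply Rmult_le_compat_r; auto. apply Rmult_le_pos; lra.
Qed.

(* [H2_coshm1 a b = cosh (lnp * H2_dist a b) - 1]: the usual
   [|z - w|^2 / (2 Im z Im w)] in the upper half-plane coordinates [(lnp x, p^t)]. *)
Definition H2_coshm1 (a b : H2_pt) : R :=
  (lnp ^ 2 * (fst a - fst b) ^ 2 + (ppow (snd a) - ppow (snd b)) ^ 2) /
  (2 * ppow (snd a) * ppow (snd b)).

Lemma H2_dist_coshm1 a b : H2_dist p a b = / lnp * arcosh (1 + H2_coshm1 a b).
Proof. reflexivity. Qed.

Lemma H2_coshm1_nonneg a b : 0 <= H2_coshm1 a b.
Proof.
  unfold H2_coshm1. pose proof (ppow_pos (snd a)). pose proof (ppow_pos (snd b)).
  pose proof (pow2_ge_0 lnp). pose proof (pow2_ge_0 (fst a - fst b)).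
  pose proof (pow2_ge_0 (ppow (snd a) - ppow (snd b))).
  apply Rmult_le_pos; [nra|]. left. apply Rinv_0_lt_compat. nra.
Qed.

Lemma H2_dist_nonneg a b : 0 <= H2_dist p a b.
Proof.
  rewrite H2_dist_coshm1. pose proof (H2_coshm1_nonneg a b). pose proof lnp_pos.
  apply Rmult_le_pos; [left; apply Rinv_0_lt_compat; lra|].
  eapply Rle_trans; [|apply arcosh_ge_ln; lra]. rewrite <- ln_1. apply ln_le; lra.
Qed.

Lemma H2_dist_refl a : H2_dist p a a = 0.
Proof.
  rewrite H2_dist_coshm1. unfold H2_coshm1, arcosh. rewrite !Rminus_diag.
  replace ((lnp ^ 2 * 0 ^ 2 + 0 ^ 2) / (2 * ppow (snd a) * ppow (snd a))) with 0
    by (unfold Rdiv; ring).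
  replace ((1 + 0) * (1 + 0) - 1) with 0 by ring.
  rewrite sqrt_0, Rplus_0_r, Rplus_0_r, ln_1. ring.
Qed.

Lemma H2_dist_scaled a b : lnp * H2_dist p a b = arcosh (1 + H2_coshm1 a b).
Proof. rewrite H2_dist_coshm1, <- Rmult_assoc, Rinv_r, Rmult_1_l; auto. pose proof lnp_pos. lra. Qed.

Lemma H2_coshm1_le_exp a b D : H2_dist p a b <= D -> 1 + H2_coshm1 a b <= exp (lnp * D).
Proof.
  intro H. pose proof (H2_coshm1_nonneg a b). pose proof lnp_pos.
  rewrite <- (exp_ln (1 + H2_coshm1 a b)) by lra. apply exp_le_compat.
  eapply Rle_trans; [apply arcosh_ge_ln; lra|]. rewrite <- H2_dist_scaled.
  apply Rmult_le_compat_l; lra.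
Qed.

Definition H2_aff (m : Z) (c : R) (a : H2_pt) : H2_pt :=
  (powerRZ (IZR p) m * fst a + c, snd a + IZR m).

Lemma H2_dist_aff m c a b : H2_dist p (H2_aff m c a) (H2_aff m c b) = H2_dist p a b.
Proof.
  rewrite !H2_dist_coshm1. do 3 f_equal. unfold H2_coshm1, H2_aff; simpl.
  rewrite !ppow_plus, <- powerRZ_ppow.
  pose proof (powerRZ_prime_pos p Hp m). pose proof (ppow_pos (snd a)). pose proof (ppow_pos (snd b)).
  field. repeat split; lra.
Qed.

Definition H2_lip_w (al be Ymin Ymax : R) : R :=
  (lnp ^ 2 * al ^ 2 + (lnp * Ymax * be) ^ 2) / (2 * Ymin ^ 2).

Definition H2_lip_const (al be Ymin Ymax : R) : R :=
  / lnp * arcosh_bound (H2_lip_w al be Ymin Ymax).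

Lemma H2_lip_w_nonneg al be Ymin Ymax : 0 < Ymin -> 0 <= H2_lip_w al be Ymin Ymax.
Proof.
  intro H. unfold H2_lip_w. pose proof (pow2_ge_0 lnp). pose proof (pow2_ge_0 al).
  pose proof (pow2_ge_0 (lnp * Ymax * be)).
  apply Rmult_le_pos; [nra|]. left. apply Rinv_0_lt_compat. nra.
Qed.

Lemma H2_lip_const_nonneg al be Ymin Ymax : 0 < Ymin -> 0 <= H2_lip_const al be Ymin Ymax.
Proof.
  intro H. unfold H2_lip_const, arcosh_bound. pose proof (H2_lip_w_nonneg al be Ymin Ymax H).
  pose proof lnp_pos. pose proof (sqrt_pos (2 * H2_lip_w al be Ymin Ymax)).
  apply Rmult_le_pos; [left; apply Rinv_0_lt_compat; lra|lra].
Qed.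

Lemma H2_coshm1_lipschitz a b al be Ymin Ymax d : 0 < Ymin ->
  Ymin <= ppow (snd a) <= Ymax -> Ymin <= ppow (snd b) <= Ymax ->
  Rabs (fst a - fst b) <= al * d -> Rabs (snd a - snd b) <= be * d ->
  0 <= d -> 0 <= be ->
  H2_coshm1 a b <= H2_lip_w al be Ymin Ymax * d ^ 2.
Proof.
  intros HY Ha Hb Hx Ht Hd Hbe. pose proof lnp_pos.
  assert (HY1 : Rabs (ppow (snd a) - ppow (snd b)) <= lnp * Ymax * (be * d)).
  { eapply Rle_trans; [apply ppow_lipschitz; [apply Ha | apply Hb]|].
    apply Rmult_le_compat_l; [nra|auto]. }
  apply (pow_maj_Rabs _ _ 2) in Hx. apply (pow_maj_Rabs _ _ 2) in HY1.
  pose proof (pow2_ge_0 lnp).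
  unfold H2_coshm1, H2_lip_w, Rdiv.
  replace ((lnp ^ 2 * al ^ 2 + (lnp * Ymax * be) ^ 2) * / (2 * Ymin ^ 2) * d ^ 2)
    with ((lnp ^ 2 * (al * d) ^ 2 + (lnp * Ymax * (be * d)) ^ 2) * / (2 * Ymin ^ 2)) by ring.
  apply Rmult_le_compat.
  - pose proof (pow2_ge_0 (fst a - fst b)). pose proof (pow2_ge_0 (ppow (snd a) - ppow (snd b))). nra.
  - left. apply Rinv_0_lt_compat. pose proof (ppow_pos (snd a)). pose proof (ppow_pos (snd b)). nra.
  - apply Rplus_le_compat; auto. apply Rmult_le_compat_l; auto.
  - apply Rinv_le_contravar; nra.
Qed.

Lemma H2_dist_lipschitz a b al be Ymin Ymax d : 0 < Ymin ->
  Ymin <= ppow (snd a) <= Ymax -> Ymin <= ppow (snd b) <= Ymax ->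
  Rabs (fst a - fst b) <= al * d -> Rabs (snd a - snd b) <= be * d ->
  0 <= d <= 1 -> 0 <= be ->
  H2_dist p a b <= H2_lip_const al be Ymin Ymax * d.
Proof.
  intros HY Ha Hb Hx Ht Hd Hbe. pose proof lnp_pos.
  set (W := H2_lip_w al be Ymin Ymax).
  assert (HW : 0 <= W) by (apply H2_lip_w_nonneg; auto).
  assert (Hw : H2_coshm1 a b <= W * d ^ 2) by (apply H2_coshm1_lipschitz; lra).
  pose proof (H2_coshm1_nonneg a b).
  assert (Hs : sqrt (2 * H2_coshm1 a b) <= sqrt (2 * W) * d).
  { rewrite <- (sqrt_square d), <- sqrt_mult by nra. apply sqrt_le_1_alt. nra. }
  apply (Rmult_le_reg_l lnp); auto. rewrite H2_dist_scaled.
  eapply Rle_trans; [apply arcosh_le_bound; auto|].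
  unfold H2_lip_const, arcosh_bound. fold W.
  replace (lnp * (/ lnp * (2 * W + sqrt (2 * W)) * d)) with ((2 * W + sqrt (2 * W)) * d)
    by (field; lra).
  assert (W * d ^ 2 <= W * d) by (apply Rmult_le_compat_l; nra).
  unfold arcosh_bound. lra.
Qed.

Lemma H2_height_bound a b D : H2_dist p a b <= D ->
  Rabs (snd a - snd b) <= ln (2 * exp (lnp * D) + 2) / lnp.
Proof.
  intro H. pose proof (H2_coshm1_le_exp a b D H) as HE.
  set (E := exp (lnp * D)) in *. pose proof lnp_pos as Hu.
  pose proof (ppow_pos (snd a)) as Ya. pose proof (ppow_pos (snd b)) as Yb.
  set (ya := ppow (snd a)) in *. set (yb := ppow (snd b)) in *.
  assert (Hq : (ya - yb) ^ 2 <= 2 * E * ya * yb).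
  { enough ((ya - yb) ^ 2 / (2 * ya * yb) <= E) as H0
      by (apply Rle_div_l in H0; nra).
    enough ((ya - yb) ^ 2 / (2 * ya * yb) <= H2_coshm1 a b) by lra.
    unfold H2_coshm1. fold ya yb. unfold Rdiv. apply Rmult_le_compat_r.
    - left; apply Rinv_0_lt_compat; nra.
    - pose proof (pow2_ge_0 lnp). pose proof (pow2_ge_0 (fst a - fst b)). nra. }
  assert (HE1 : 0 < E) by apply exp_pos.
  assert (L1 : ln ya <= ln (2 * E + 2) + ln yb) by (rewrite <- ln_mult by nra; apply ln_le; nra).
  assert (L2 : ln yb <= ln (2 * E + 2) + ln ya) by (rewrite <- ln_mult by nra; apply ln_le; nra).
  unfold ya, yb, ppow, Rpower in L1, L2. rewrite !ln_exp in L1, L2. fold lnp in L1, L2.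
  assert (Q : ln (2 * E + 2) / lnp * lnp = ln (2 * E + 2)) by (field; lra).
  apply Rabs_le. split; apply (Rmult_le_reg_r lnp); auto; nra.
Qed.

Lemma H2_horizontal_bound a b D : H2_dist p a b <= D ->
  lnp ^ 2 * (fst a - fst b) ^ 2 <= 2 * exp (lnp * D) * ppow (snd a) * ppow (snd b).
Proof.
  intro H. pose proof (H2_coshm1_le_exp a b D H) as HE.
  pose proof (ppow_pos (snd a)). pose proof (ppow_pos (snd b)).
  pose proof (H2_coshm1_nonneg a b).
  unfold H2_coshm1 in *.
  assert (HE' : (lnp ^ 2 * (fst a - fst b) ^ 2 + (ppow (snd a) - ppow (snd b)) ^ 2) /
                (2 * ppow (snd a) * ppow (snd b)) <= exp (lnp * D)) by lra.
  apply Rle_div_l in HE'; [|nra].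
  pose proof (pow2_ge_0 (ppow (snd a) - ppow (snd b))). nra.
Qed.

End Hyperbolic.

Lemma Lub_Rbar_bounded (E : R -> Prop) B :
  (exists x, E x) -> (forall x, E x -> x <= B) ->
  (forall x, E x -> x <= real (Lub_Rbar E)) /\
  (forall ub, (forall x, E x -> x <= ub) -> real (Lub_Rbar E) <= ub).
Proof.
  intros [x0 Hx0] HB. destruct (Lub_Rbar_correct E) as [Hub Hl].
  assert (H1 : Rbar_le (Lub_Rbar E) B) by (apply Hl; intros x Hx; simpl; auto).
  assert (H2 : Rbar_le x0 (Lub_Rbar E)) by (apply Hub; auto).
  destruct (Lub_Rbar E) as [M| |]; simpl in *; try contradiction.
  split.
  - intros x Hx. exact (Hub x Hx).
  - intros ub Hu. exact (Hl (Finite ub) Hu).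
Qed.

Lemma up_ge x : x <= IZR (up x).
Proof. destruct (archimed x). lra. Qed.

Lemma up_le x : IZR (up x) <= x + 1.
Proof. destruct (archimed x). lra. Qed.

Section Tree.

Variable p : Z.
Hypothesis Hp : prime p.

Definition common_heights (v w : Tree_pt) (g : R) : Prop :=
  g <= fst v /\ g <= fst w /\ exists k : Z, g <= IZR k /\ in_pkZ p k (snd v - snd w).

Lemma common_heights_min v w K : in_pkZ p K (snd v - snd w) ->
  common_heights v w (Rmin (Rmin (fst v) (fst w)) (IZR K)).
Proof.
  intro H. pose proof (Rmin_l (Rmin (fst v) (fst w)) (IZR K)).
  pose proof (Rmin_l (fst v) (fst w)). pose proof (Rmin_r (fst v) (fst w)).
  repeat split; try lra. exists K. split; auto. apply Rmin_r.
Qed.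

Lemma Tree_meet_spec v w K : in_pkZ p K (snd v - snd w) ->
  (forall g, common_heights v w g -> g <= Tree_meet p v w) /\
  (forall ub, (forall g, common_heights v w g -> g <= ub) -> Tree_meet p v w <= ub).
Proof.
  intro H. apply (Lub_Rbar_bounded _ (fst v)).
  - eexists; apply common_heights_min; eauto.
  - intros x [Hx _]; auto.
Qed.

Lemma Tree_meet_ge v w K : in_pkZ p K (snd v - snd w) ->
  Rmin (Rmin (fst v) (fst w)) (IZR K) <= Tree_meet p v w.
Proof. intro H. apply (proj1 (Tree_meet_spec v w K H)). apply common_heights_min; auto. Qed.

Lemma Tree_meet_le v w K : in_pkZ p K (snd v - snd w) -> Tree_meet p v w <= Rmin (fst v) (fst w).
Proof.
  intro H. apply (proj2 (Tree_meet_spec v w K H)). intros g (H1 & H2 & _). apply Rmin_glb; auto.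
Qed.

Lemma Tree_meet_gt v w K0 (h : R) : in_pkZ p K0 (snd v - snd w) -> h < Tree_meet p v w ->
  exists k : Z, h < IZR k /\ in_pkZ p k (snd v - snd w).
Proof.
  intros H0 H. destruct (classic (exists g, common_heights v w g /\ h < g))
    as [[g [(_ & _ & k & Hk & Hk') Hg]] | Hn].
  - exists k. split; auto. lra.
  - exfalso. enough (Tree_meet p v w <= h) by lra.
    apply (proj2 (Tree_meet_spec v w K0 H0)). intros g Hg.
    apply Rnot_lt_le. intro Hlt. eauto.
Qed.

Lemma Tree_dist_le v w K : in_pkZ p K (snd v - snd w) ->
  Tree_dist p v w <= fst v + fst w - 2 * Rmin (Rmin (fst v) (fst w)) (IZR K).
Proof. intro H. unfold Tree_dist. pose proof (Tree_meet_ge v w K H). lra. Qed.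

Lemma Tree_dist_refl v : Tree_dist p v v = 0.
Proof.
  assert (H : in_pkZ p (up (fst v)) (snd v - snd v)) by (rewrite Rminus_diag; apply in_pkZ_0).
  pose proof (Tree_meet_ge v v _ H). pose proof (Tree_meet_le v v _ H). pose proof (up_ge (fst v)).
  rewrite (Rmin_left (fst v) (fst v)) in * by lra.
  rewrite (Rmin_left (fst v) (IZR (up (fst v)))) in * by lra.
  unfold Tree_dist. lra.
Qed.

Lemma Tree_dist_sym v w : Tree_dist p v w = Tree_dist p w v.
Proof.
  unfold Tree_dist, Tree_meet.
  enough (Lub_Rbar (common_heights v w) = Lub_Rbar (common_heights w v)) as E.
  { unfold common_heights in E. rewrite E. lra. }
  apply Lub_Rbar_eqset. intro g. unfold common_heights.
  split; intros (A & B & k & C & D); repeat split; auto; exists k; split; auto;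
    [replace (snd w - snd v) with (- (snd v - snd w)) by ring
    |replace (snd v - snd w) with (- (snd w - snd v)) by ring]; apply in_pkZ_opp; auto.
Qed.

(* It sends classes modulo [p^n Z] to classes modulo [p^(n-m) Z], hence is a tree automorphism. *)
Definition Tree_aff (m : Z) (c : R) (v : Tree_pt) : Tree_pt :=
  (fst v - IZR m, powerRZ (IZR p) (- m) * snd v + c).

Lemma Tree_meet_aff m c v w K : in_pkZ p K (snd v - snd w) ->
  Tree_meet p (Tree_aff m c v) (Tree_aff m c w) = Tree_meet p v w - IZR m.
Proof.
  intros HK.
  assert (Hd : snd (Tree_aff m c v) - snd (Tree_aff m c w) =
               powerRZ (IZR p) (- m) * (snd v - snd w)) by (unfold Tree_aff; simpl; ring).
  assert (HK' : in_pkZ p (K - m) (snd (Tree_aff m c v) - snd (Tree_aff m c w))).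
  { rewrite Hd. apply in_pkZ_scale_iff; auto. replace (K - m + m)%Z with K by lia. auto. }
  destruct (Tree_meet_spec v w K HK) as [A1 A2].
  destruct (Tree_meet_spec _ _ _ HK') as [B1 B2].
  set (mv := Tree_meet p (Tree_aff m c v) (Tree_aff m c w)) in *.
  apply Rle_antisym.
  - apply B2. intros x (H1 & H2 & k & H3 & H4). rewrite Hd in H4.
    unfold Tree_aff in H1, H2; simpl in H1, H2.
    enough (x + IZR m <= Tree_meet p v w) by lra.
    apply A1. repeat split; try lra. exists (k + m)%Z. rewrite plus_IZR.
    split; [lra|]. apply in_pkZ_scale_iff; auto.
  - enough (Tree_meet p v w <= mv + IZR m) by lra.
    apply A2. intros x (H1 & H2 & k & H3 & H4).
    enough (x - IZR m <= mv) by lra.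
    apply B1. unfold common_heights, Tree_aff; simpl. repeat split; try lra. exists (k - m)%Z.
    rewrite minus_IZR. split; [lra|].
    replace (powerRZ (IZR p) (- m) * snd v + c - (powerRZ (IZR p) (- m) * snd w + c))
      with (powerRZ (IZR p) (- m) * (snd v - snd w)) by ring.
    apply in_pkZ_scale_iff; auto.
    replace (k - m + m)%Z with k by lia; auto.
Qed.

Lemma Tree_dist_aff m c v w : in_Tree p v -> in_Tree p w ->
  Tree_dist p (Tree_aff m c v) (Tree_aff m c w) = Tree_dist p v w.
Proof.
  intros Hv Hw. destruct (in_Zinvp_sub_pkZ p Hp _ _ Hv Hw) as [K HK].
  unfold Tree_dist. rewrite (Tree_meet_aff m c v w K) by auto.
  unfold Tree_aff; simpl. ring.
Qed.

(* The branch switch at time [s0] costs nothing: it happens at height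
   [h s0 <= K], where the two branches have already merged. *)
Lemma Tree_path_lipschitz (h r : R -> R) be s0 R1 R2 K :
  0 <= be ->
  (forall a b, 0 <= a <= 1 -> 0 <= b <= 1 -> Rabs (h a - h b) <= be * Rabs (a - b)) ->
  (forall s, s < s0 -> r s = R1) -> (forall s, s0 <= s -> r s = R2) ->
  in_pkZ p K (R1 - R2) -> h s0 <= IZR K -> 0 <= s0 <= 1 ->
  forall a b, 0 <= a <= 1 -> 0 <= b <= 1 ->
  Tree_dist p (h a, r a) (h b, r b) <= be * Rabs (a - b).
Proof.
  intros Hbe Hh Hr1 Hr2 HK Hs0 Hs0r.
  assert (same : forall a b, 0 <= a <= 1 -> 0 <= b <= 1 -> r a = r b ->
            Tree_dist p (h a, r a) (h b, r b) <= be * Rabs (a - b)).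
  { intros a b Ha Hb E.
    assert (Hk : in_pkZ p (up (Rmax (h a) (h b))) (snd (h a, r a) - snd (h b, r b)))
      by (simpl; rewrite E, Rminus_diag; apply in_pkZ_0).
    eapply Rle_trans; [apply Tree_dist_le; eauto|]. simpl.
    pose proof (up_ge (Rmax (h a) (h b))). pose proof (Rmax_l (h a) (h b)).
    pose proof (Rmax_r (h a) (h b)). pose proof (proj1 (Rabs_le_between _ _) (Hh a b Ha Hb)).
    unfold Rmin in *. repeat destruct Rle_dec; simpl in *; lra. }
  assert (cross : forall a b, 0 <= a <= 1 -> 0 <= b <= 1 -> a < s0 -> s0 <= b ->
            Tree_dist p (h a, r a) (h b, r b) <= be * Rabs (a - b)).
  { intros a b Ha Hb Has Hbs. rewrite Hr1, Hr2 by auto.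
    eapply Rle_trans; [apply Tree_dist_le; simpl; eauto|]. simpl.
    pose proof (proj1 (Rabs_le_between _ _) (Hh a b Ha Hb)).
    pose proof (proj1 (Rabs_le_between _ _) (Hh a s0 Ha Hs0r)).
    pose proof (proj1 (Rabs_le_between _ _) (Hh b s0 Hb Hs0r)).
    rewrite (Rabs_left (a - b)), (Rabs_left (a - s0)), (Rabs_right (b - s0)) in * by lra.
    unfold Rmin in *. repeat destruct Rle_dec; simpl in *; nra. }
  intros a b Ha Hb.
  destruct (Rlt_dec a s0) as [Ha0|Ha0]; destruct (Rlt_dec b s0) as [Hb0|Hb0].
  - apply same; auto. rewrite !Hr1; auto.
  - apply cross; auto; lra.
  - rewrite Tree_dist_sym, Rabs_minus_sym. apply cross; auto; lra.
  - apply same; auto. rewrite !Hr2; auto; lra.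
Qed.

End Tree.

Lemma norm2_00 N : is_norm2 N -> N 0 0 = 0.
Proof.
  intros (_ & _ & Hs & _). specialize (Hs 0 0 0).
  rewrite !Rmult_0_l, Rabs_R0, Rmult_0_l in Hs. auto.
Qed.

Section Horocyclic.

Variable p : Z.
Hypothesis Hp : prime p.

Lemma MF_dist_refl a : in_MF p a -> MF_dist p a a = 0.
Proof.
  intro Ha. apply path_dist_refl; auto; [|apply H2_dist_refl].
  split; intros s _ eps Heps; exists 1; split; try lra; intros; simpl.
  - rewrite H2_dist_refl. lra.
  - rewrite Tree_dist_refl. lra.
Qed.

Lemma HP_dist_refl N z : is_norm2 N -> in_HP p z -> HP_dist p N z z = 0.
Proof.
  intros HN Hz. pose proof Hz as (Ha & Hb & _). apply path_dist_refl; auto.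
  - split; intros s _ eps Heps; exists 1; split; try lra; intros; simpl;
      rewrite MF_dist_refl; auto; lra.
  - rewrite !MF_dist_refl by auto. apply norm2_00; auto.
Qed.

Definition MF_aff (m : Z) (c1 c2 : R) (a : MF_pt) : MF_pt :=
  (H2_aff p m c1 (fst a), Tree_aff p m c2 (snd a)).

(* On the second factor, [t] plays the role of [-t]: the same group element
   acts there with the opposite exponent and the two translation parts swapped. *)
Definition HP_aff (n : Z) (w1 w2 : R) (z : HP_pt) : HP_pt :=
  (MF_aff n w1 w2 (fst z), MF_aff (- n) w2 w1 (snd z)).

Lemma MF_aff_comp n m a1 a2 b1 b2 x :
  MF_aff n a1 a2 (MF_aff m b1 b2 x) =
  MF_aff (n + m) (a1 + powerRZ (IZR p) n * b1) (a2 + powerRZ (IZR p) (- n) * b2) x.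
Proof.
  destruct x as [[x t] [h r]]. unfold MF_aff, H2_aff, Tree_aff; simpl.
  replace (- (n + m))%Z with (- n + - m)%Z by lia.
  rewrite !powerRZ_add, !plus_IZR by exact (IZR_prime_neq0 p Hp).
  f_equal; f_equal; ring.
Qed.

Lemma MF_aff_id x : MF_aff 0 0 0 x = x.
Proof.
  destruct x as [[x t] [h r]]. unfold MF_aff, H2_aff, Tree_aff; simpl. f_equal; f_equal; ring.
Qed.

Lemma HP_aff_comp n m a1 a2 b1 b2 z :
  HP_aff n a1 a2 (HP_aff m b1 b2 z) =
  HP_aff (n + m) (a1 + powerRZ (IZR p) n * b1) (a2 + powerRZ (IZR p) (- n) * b2) z.
Proof.
  unfold HP_aff; simpl. rewrite !MF_aff_comp, Z.opp_involutive.
  replace (- n + - m)%Z with (- (n + m))%Z by lia. reflexivity.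
Qed.

Lemma HP_aff_id z : HP_aff 0 0 0 z = z.
Proof. destruct z. unfold HP_aff; simpl. rewrite !MF_aff_id. reflexivity. Qed.

Definition MF_aff_inv (m : Z) (c1 c2 : R) : MF_pt -> MF_pt :=
  MF_aff (- m) (- (powerRZ (IZR p) (- m) * c1)) (- (powerRZ (IZR p) m * c2)).

Definition HP_aff_inv (n : Z) (w1 w2 : R) : HP_pt -> HP_pt :=
  HP_aff (- n) (- (powerRZ (IZR p) (- n) * w1)) (- (powerRZ (IZR p) n * w2)).

Lemma MF_aff_invK m c1 c2 x : MF_aff_inv m c1 c2 (MF_aff m c1 c2 x) = x.
Proof.
  unfold MF_aff_inv. rewrite MF_aff_comp, Z.opp_involutive, <- MF_aff_id.
  f_equal; [lia|ring|ring].
Qed.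

Lemma HP_aff_invK n w1 w2 z : HP_aff_inv n w1 w2 (HP_aff n w1 w2 z) = z.
Proof.
  unfold HP_aff_inv. rewrite HP_aff_comp, Z.opp_involutive, <- HP_aff_id.
  f_equal; [lia|ring|ring].
Qed.

Lemma in_MF_aff m c1 c2 a : in_Zinvp p c2 -> in_MF p a -> in_MF p (MF_aff m c1 c2 a).
Proof.
  intros Hc [Ht Hb]. destruct a as [[x t] [h r]].
  unfold in_MF, in_Tree, MF_aff, H2_aff, Tree_aff, H2_beta, Tree_beta in *; simpl in *.
  split; [apply in_Zinvp_affine; auto | lra].
Qed.

Lemma in_HP_aff n w1 w2 z : in_Zinvp p w1 -> in_Zinvp p w2 -> in_HP p z ->
  in_HP p (HP_aff n w1 w2 z).
Proof.
  intros H1 H2 (Ha & Hb & Hab). unfold HP_aff. split; [|split]; simpl.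
  - apply in_MF_aff; auto.
  - apply in_MF_aff; auto.
  - destruct z as [[[x t] v] [[x' t'] v']].
    unfold MF_beta, H2_beta, MF_aff, H2_aff in *; simpl in *. rewrite opp_IZR. lra.
Qed.

Lemma MF_aff_preserves_paths m c1 c2 : in_Zinvp p c2 ->
  preserves_paths (in_MF p) (MF_cont p) (fun x y => H2_dist p (fst x) (fst y)) (MF_aff m c1 c2).
Proof.
  intro Hc. split; [|split].
  - intros. apply in_MF_aff; auto.
  - intros. apply H2_dist_aff; auto.
  - intros g Hg [C1 C2]. split.
    + apply (cont01_isometry _ (fun _ => True) (H2_aff p m c1) (fun s => fst (g s))); auto.
      intros. apply H2_dist_aff; auto.
    + apply (cont01_isometry _ (in_Tree p) (Tree_aff p m c2) (fun s => snd (g s))); auto.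
      * intros. apply Tree_dist_aff; auto.
      * intros s Hs. apply Hg; auto.
Qed.

Lemma MF_dist_aff m c1 c2 a b : in_Zinvp p c2 ->
  MF_dist p (MF_aff m c1 c2 a) (MF_aff m c1 c2 b) = MF_dist p a b.
Proof.
  intro Hc. apply (path_dist_invariant _ _ _ _ (MF_aff_inv m c1 c2)).
  - apply MF_aff_preserves_paths; auto.
  - apply MF_aff_preserves_paths. apply in_Zinvp_opp; auto. apply in_Zinvp_mul; auto.
    apply in_Zinvp_pow.
  - apply MF_aff_invK.
Qed.

Lemma HP_aff_preserves_paths N n w1 w2 : in_Zinvp p w1 -> in_Zinvp p w2 ->
  preserves_paths (in_HP p) (HP_cont p)
    (fun x y => N (MF_dist p (fst x) (fst y)) (MF_dist p (snd x) (snd y))) (HP_aff n w1 w2).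
Proof.
  intros H1 H2. split; [|split].
  - intros. apply in_HP_aff; auto.
  - intros. simpl. rewrite !MF_dist_aff; auto.
  - intros g Hg [C1 C2]. split.
    + apply (cont01_isometry _ (fun _ => True) (MF_aff n w1 w2) (fun s => fst (g s))); auto.
      intros. apply MF_dist_aff; auto.
    + apply (cont01_isometry _ (fun _ => True) (MF_aff (- n) w2 w1) (fun s => snd (g s))); auto.
      intros. apply MF_dist_aff; auto.
Qed.

Lemma HP_dist_aff N n w1 w2 z z' : in_Zinvp p w1 -> in_Zinvp p w2 ->
  HP_dist p N (HP_aff n w1 w2 z) (HP_aff n w1 w2 z') = HP_dist p N z z'.
Proof.
  intros H1 H2. apply (path_dist_invariant _ _ _ _ (HP_aff_inv n w1 w2)).
  - apply HP_aff_preserves_paths; auto.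
  - apply HP_aff_preserves_paths; apply in_Zinvp_opp, in_Zinvp_mul; auto; apply in_Zinvp_pow.
  - apply HP_aff_invK.
Qed.

(* Coordinates [(X1, T, R1, X2, R2)] of a point of the horocyclic product: the
   heights of all four components are determined by [T]. *)
Definition HP_point (X1 T R1 X2 R2 : R) : HP_pt :=
  (((X1, T), (- T, R1)), ((X2, - T), (T, R2))).

Lemma in_HP_point X1 T R1 X2 R2 :
  in_Zinvp p R1 -> in_Zinvp p R2 -> in_HP p (HP_point X1 T R1 X2 R2).
Proof.
  intros H1 H2. unfold HP_point, in_HP, in_MF, in_Tree, MF_beta, H2_beta, Tree_beta; simpl.
  repeat split; auto; lra.
Qed.

Lemma in_HP_inv z : in_HP p z ->
  exists X1 T R1 X2 R2, z = HP_point X1 T R1 X2 R2 /\ in_Zinvp p R1 /\ in_Zinvp p R2.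
Proof.
  destruct z as [[[x t] [h r]] [[x' t'] [h' r']]].
  intros ([Z1 B1] & [Z2 B2] & B). unfold MF_beta, H2_beta, Tree_beta, in_Tree in *; simpl in *.
  exists x, t, r, x', r'. repeat split; auto.
  unfold HP_point. repeat f_equal; lra.
Qed.

Lemma HP_aff_point n w1 w2 X1 T R1 X2 R2 :
  HP_aff n w1 w2 (HP_point X1 T R1 X2 R2) =
  HP_point (powerRZ (IZR p) n * X1 + w1) (T + IZR n) (powerRZ (IZR p) (- n) * R1 + w2)
           (powerRZ (IZR p) (- n) * X2 + w2) (powerRZ (IZR p) n * R2 + w1).
Proof.
  unfold HP_aff, HP_point, MF_aff, H2_aff, Tree_aff; simpl.
  rewrite Z.opp_involutive, opp_IZR. f_equal; f_equal; f_equal; ring.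
Qed.

End Horocyclic.

Definition mconj (P X : mat2) : mat2 := mmul (mmul P X) (minv P).

Lemma mconj_mul P X Y : mdet P <> 0 -> mmul (mconj P X) (mconj P Y) = mconj P (mmul X Y).
Proof.
  intro HP. destruct P as [a b c d], X as [x1 x2 x3 x4], Y as [y1 y2 y3 y4].
  unfold mconj, mmul, minv, mdet in *; simpl in *. f_equal; field; auto.
Qed.

Lemma mconj_id P : mdet P <> 0 -> mconj P mid = mid.
Proof.
  intro HP. destruct P as [a b c d]. unfold mconj, mmul, minv, mdet, mid in *; simpl in *.
  f_equal; field; auto.
Qed.

Lemma mdet_mconj P X : mdet P <> 0 -> mdet (mconj P X) = mdet X.
Proof.
  intro HP. destruct P as [a b c d], X as [x1 x2 x3 x4].
  unfold mconj, mmul, minv, mdet in *; simpl in *. field; auto.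
Qed.

Lemma minv_mconj P X : mdet P <> 0 -> mdet X <> 0 -> minv (mconj P X) = mconj P (minv X).
Proof.
  intros HP HX. unfold minv at 1. rewrite mdet_mconj by auto.
  destruct P as [a b c d], X as [x1 x2 x3 x4].
  unfold mconj, mmul, minv, mdet in *; simpl in *. f_equal; field; auto.
Qed.

Lemma mpow_nat_mconj P X k : mdet P <> 0 -> mpow_nat (mconj P X) k = mconj P (mpow_nat X k).
Proof.
  intro HP. induction k as [|k IH]; simpl.
  - symmetry. apply mconj_id; auto.
  - rewrite IH. apply mconj_mul; auto.
Qed.

Lemma mapply_mmul A B v : mapply (mmul A B) v = mapply A (mapply B v).
Proof. destruct A, B, v. unfold mapply, mmul; simpl. f_equal; ring. Qed.

Lemma mapply_plus M v u :
  mapply M (fst v + fst u, snd v + snd u) =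
  (fst (mapply M v) + fst (mapply M u), snd (mapply M v) + snd (mapply M u)).
Proof. unfold mapply; simpl. f_equal; ring. Qed.

Lemma mapply_minvK P v : mdet P <> 0 -> mapply (minv P) (mapply P v) = v.
Proof.
  intro HP. destruct P as [a b c d], v as [v1 v2]. unfold mapply, minv, mdet in *; simpl in *.
  f_equal; field; auto.
Qed.

Lemma mapply_minvKV P v : mdet P <> 0 -> mapply P (mapply (minv P) v) = v.
Proof.
  intro HP. destruct P as [a b c d], v as [v1 v2]. unfold mapply, minv, mdet in *; simpl in *.
  f_equal; field; auto.
Qed.

Section DiagonalPowers.

Variable p : Z.
Hypothesis Hp : prime p.

Definition diag_pow (m : Z) : mat2 := Mat2 (powerRZ (IZR p) m) 0 0 (powerRZ (IZR p) (- m)).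

Lemma diag_pow_mul m m' : mmul (diag_pow m) (diag_pow m') = diag_pow (m + m').
Proof.
  unfold diag_pow, mmul; simpl. replace (- (m + m'))%Z with (- m + - m')%Z by lia.
  rewrite !powerRZ_add by exact (IZR_prime_neq0 p Hp). f_equal; ring.
Qed.

Lemma mpow_nat_diag_pow m k : mpow_nat (diag_pow m) k = diag_pow (m * Z.of_nat k).
Proof.
  induction k as [|k IH]; simpl mpow_nat.
  - rewrite Z.mul_0_r. reflexivity.
  - rewrite IH, diag_pow_mul. f_equal. lia.
Qed.

Lemma mdet_diag_pow m : mdet (diag_pow m) = 1.
Proof.
  unfold mdet, diag_pow; simpl. rewrite Rmult_0_r, Rminus_0_r, Rmult_comm.
  apply powerRZ_prime_opp_l; auto.
Qed.

Lemma minv_diag_pow m : minv (diag_pow m) = diag_pow (- m).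
Proof.
  unfold minv. rewrite mdet_diag_pow. unfold diag_pow; simpl. rewrite Z.opp_involutive.
  f_equal; field.
Qed.

Lemma mpowZ_mconj_diag P n : mdet P <> 0 -> mpowZ (mconj P (diag_p p)) n = mconj P (diag_pow n).
Proof.
  intro HP. replace (diag_p p) with (diag_pow 1)
    by (unfold diag_p, diag_pow; simpl; rewrite !Rmult_1_r; reflexivity).
  destruct n as [|k|k]; simpl.
  - symmetry. apply mconj_id; auto.
  - rewrite mpow_nat_mconj, mpow_nat_diag_pow by auto. do 2 f_equal. lia.
  - rewrite minv_mconj, minv_diag_pow, mpow_nat_mconj, mpow_nat_diag_pow by
      (auto; rewrite mdet_diag_pow; lra).
    do 2 f_equal. lia.
Qed.

Lemma mapply_minv_mconj_diag P n v : mdet P <> 0 ->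
  mapply (minv P) (mapply (mconj P (diag_pow n)) v) =
  (powerRZ (IZR p) n * fst (mapply (minv P) v), powerRZ (IZR p) (- n) * snd (mapply (minv P) v)).
Proof.
  intro HP. unfold mconj. rewrite !mapply_mmul.
  destruct P as [a b c d], v as [v1 v2]. unfold mapply, minv, diag_pow, mdet in *; simpl in *.
  f_equal; field; auto.
Qed.

End DiagonalPowers.

Section Action.

Variable p : Z.
Hypothesis Hp : prime p.
Variable P : mat2.
Hypothesis HP : in_GL2_Zinvp p P.

Lemma mdet_GL2 : mdet P <> 0.
Proof. apply HP. Qed.

(* Conjugating by [P], [A^n] becomes [diag(p^n, p^-n)], which acts on
   [H^2_p[p] x H^2_p[p]] through [HP_aff]. *)
Definition Gp_act (g : Gp_elt) (z : HP_pt) : HP_pt :=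
  HP_aff p (snd g) (fst (mapply (minv P) (fst g))) (snd (mapply (minv P) (fst g))) z.

Lemma in_Zinvp_mapply_minv v : in_Zinvp p (fst v) -> in_Zinvp p (snd v) ->
  in_Zinvp p (fst (mapply (minv P) v)) /\ in_Zinvp p (snd (mapply (minv P) v)).
Proof.
  destruct HP as (H11 & H12 & H21 & H22 & Hd & Hdi). intros H1 H2.
  destruct v as [v1 v2]. unfold mapply, minv, Rdiv; simpl in *.
  split; apply in_Zinvp_add; auto; repeat apply in_Zinvp_mul; auto; apply in_Zinvp_opp; auto.
Qed.

Lemma in_Zinvp_mapply v : in_Zinvp p (fst v) -> in_Zinvp p (snd v) ->
  in_Zinvp p (fst (mapply P v)) /\ in_Zinvp p (snd (mapply P v)).
Proof.
  destruct HP as (H11 & H12 & H21 & H22 & _). intros H1 H2.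
  destruct v as [v1 v2]. unfold mapply; simpl in *.
  split; apply in_Zinvp_add; auto; apply in_Zinvp_mul; auto.
Qed.

Lemma in_HP_Gp_act g x : in_Gp p g -> in_HP p x -> in_HP p (Gp_act g x).
Proof.
  intros [G1 G2] Hx. destruct (in_Zinvp_mapply_minv (fst g) G1 G2).
  apply in_HP_aff; auto.
Qed.

Lemma Gp_act_one x : Gp_act Gp_one x = x.
Proof.
  unfold Gp_act, Gp_one; simpl. rewrite !Rmult_0_r, !Rplus_0_r. apply HP_aff_id.
Qed.

Lemma Gp_act_mul g h x :
  Gp_act (Gp_mul (mconj P (diag_p p)) g h) x = Gp_act g (Gp_act h x).
Proof.
  unfold Gp_act at 2 3. rewrite HP_aff_comp by auto. unfold Gp_act, Gp_mul.
  cbv beta zeta. cbn [fst snd].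
  rewrite mpowZ_mconj_diag by (auto; apply mdet_GL2).
  rewrite mapply_plus, (mapply_minv_mconj_diag p P (snd g) (fst h) mdet_GL2). reflexivity.
Qed.

Lemma Gp_act_isometry N g x y : in_Gp p g ->
  HP_dist p N (Gp_act g x) (Gp_act g y) = HP_dist p N x y.
Proof.
  intros [G1 G2]. destruct (in_Zinvp_mapply_minv (fst g) G1 G2).
  apply HP_dist_aff; auto.
Qed.

Lemma Gp_act_point v n X1 T R1 X2 R2 :
  let w := mapply (minv P) v in
  Gp_act (v, n) (HP_point X1 T R1 X2 R2) =
  HP_point (powerRZ (IZR p) n * X1 + fst w) (T + IZR n) (powerRZ (IZR p) (- n) * R1 + snd w)
           (powerRZ (IZR p) (- n) * X2 + snd w) (powerRZ (IZR p) n * R2 + fst w).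
Proof. apply HP_aff_point. Qed.

End Action.

Section MonotoneNorm.

Variable N : R -> R -> R.
Hypothesis HN : monotone_norm2 N.

Lemma monotone_norm2_nonneg a b : 0 <= N a b.
Proof. apply HN. Qed.

Lemma monotone_norm2_hom l a b : N (l * a) (l * b) = Rabs l * N a b.
Proof. apply HN. Qed.

Lemma monotone_norm2_10_pos : 0 < N 1 0.
Proof.
  destruct HN as [(H0 & H1 & _) _]. destruct (H0 1 0); auto.
  exfalso. destruct (H1 1 0); auto. lra.
Qed.

Lemma monotone_norm2_01_pos : 0 < N 0 1.
Proof.
  destruct HN as [(H0 & H1 & _) _]. destruct (H0 0 1); auto.
  exfalso. destruct (H1 0 1); auto. lra.
Qed.

Lemma monotone_norm2_ge_l a b : 0 <= a -> 0 <= b -> a * N 1 0 <= N a b.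
Proof.
  intros Ha Hb. replace (a * N 1 0) with (N (a * 1) (a * 0))
    by (rewrite monotone_norm2_hom, Rabs_right by lra; auto).
  rewrite Rmult_1_r, Rmult_0_r. apply HN; lra.
Qed.

Lemma monotone_norm2_ge_r a b : 0 <= a -> 0 <= b -> b * N 0 1 <= N a b.
Proof.
  intros Ha Hb. replace (b * N 0 1) with (N (b * 0) (b * 1))
    by (rewrite monotone_norm2_hom, Rabs_right by lra; auto).
  rewrite Rmult_1_r, Rmult_0_r. apply HN; lra.
Qed.

End MonotoneNorm.

Section LipschitzPaths.

Variable p : Z.

(* Since a millefeuille path has the length of its [H^2_p]-component, an
   [H^2_p]-Lipschitz path is Lipschitz for [MF_dist] too. *)
Lemma MF_admissible_lipschitz g K : 0 <= K ->
  (forall s, 0 <= s <= 1 -> in_MF p (g s)) -> MF_cont p g ->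
  (forall a b, 0 <= a <= 1 -> 0 <= b <= 1 ->
     H2_dist p (fst (g a)) (fst (g b)) <= K * Rabs (a - b)) ->
  forall s s', 0 <= s <= 1 -> 0 <= s' <= 1 ->
  admissible_length (in_MF p) (MF_cont p) (fun x y => H2_dist p (fst x) (fst y))
    (g s) (g s') (K * Rabs (s - s')).
Proof.
  intros HK Hin [C1 C2] Hlip s s' Hs Hs'.
  exists (fun t => g (s + t * (s' - s))). split; [|split; [|split; [|split]]].
  - f_equal. ring.
  - f_equal. ring.
  - intros t Ht. apply Hin. nra.
  - split; [apply (cont01_reparam _ (fun t => fst (g t)))
           |apply (cont01_reparam _ (fun t => snd (g t)))]; auto.
  - apply chain_sum_lipschitz.
    + pose proof (Rabs_pos (s - s')). nra.
    + intros a b Ha Hb. eapply Rle_trans; [apply Hlip; nra|].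
      replace (s + a * (s' - s) - (s + b * (s' - s))) with ((b - a) * (s - s')) by ring.
      rewrite Rabs_mult. right. ring.
Qed.

Lemma MF_dist_lipschitz g K : 0 <= K ->
  (forall s, 0 <= s <= 1 -> in_MF p (g s)) -> MF_cont p g ->
  (forall a b, 0 <= a <= 1 -> 0 <= b <= 1 ->
     H2_dist p (fst (g a)) (fst (g b)) <= K * Rabs (a - b)) ->
  forall s s', 0 <= s <= 1 -> 0 <= s' <= 1 -> MF_dist p (g s) (g s') <= K * Rabs (s - s').
Proof. intros. apply path_dist_le. apply MF_admissible_lipschitz; auto. Qed.

Lemma HP_admissible_lipschitz N z K1 K2 : monotone_norm2 N -> 0 <= K1 -> 0 <= K2 ->
  (forall s, 0 <= s <= 1 -> in_HP p (z s)) ->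
  MF_cont p (fun s => fst (z s)) -> MF_cont p (fun s => snd (z s)) ->
  (forall a b, 0 <= a <= 1 -> 0 <= b <= 1 ->
     H2_dist p (fst (fst (z a))) (fst (fst (z b))) <= K1 * Rabs (a - b)) ->
  (forall a b, 0 <= a <= 1 -> 0 <= b <= 1 ->
     H2_dist p (fst (snd (z a))) (fst (snd (z b))) <= K2 * Rabs (a - b)) ->
  admissible_length (in_HP p) (HP_cont p)
    (fun x y => N (MF_dist p (fst x) (fst y)) (MF_dist p (snd x) (snd y)))
    (z 0) (z 1) (Rmax K1 K2 * N 1 1).
Proof.
  intros HN HK1 HK2 Hin Hc1 Hc2 L1 L2.
  set (K := Rmax K1 K2).
  assert (HK : 0 <= K) by (unfold K; apply (Rle_trans _ K1); [auto|apply Rmax_l]).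
  assert (M1 : forall a b, 0 <= a <= 1 -> 0 <= b <= 1 ->
                 MF_dist p (fst (z a)) (fst (z b)) <= K * Rabs (a - b)).
  { intros a b Ha Hb. eapply Rle_trans.
    - apply (MF_dist_lipschitz (fun s => fst (z s)) K1); auto. intros s Hs; apply Hin; auto.
    - apply Rmult_le_compat_r; [apply Rabs_pos| apply Rmax_l]. }
  assert (M2 : forall a b, 0 <= a <= 1 -> 0 <= b <= 1 ->
                 MF_dist p (snd (z a)) (snd (z b)) <= K * Rabs (a - b)).
  { intros a b Ha Hb. eapply Rle_trans.
    - apply (MF_dist_lipschitz (fun s => snd (z s)) K2); auto. intros s Hs; apply Hin; auto.
    - apply Rmult_le_compat_r; [apply Rabs_pos| apply Rmax_r]. }
  pose proof (monotone_norm2_nonneg N HN 1 1).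
  exists z. split; [auto|split; [auto|split; [auto|split; [split|]]]].
  - apply (lipschitz_cont01 _ _ K); auto.
  - apply (lipschitz_cont01 _ _ K); auto.
  - apply chain_sum_lipschitz; [apply Rmult_le_pos; auto|].
    intros a b Ha Hb. eapply Rle_trans.
    + apply HN; split; try apply path_dist_nonneg; [apply M1 | apply M2]; auto.
    + rewrite <- (Rmult_1_r (K * Rabs (a - b))) at 1 2.
      rewrite monotone_norm2_hom, Rabs_right, Rabs_minus_sym by
        (auto; apply Rle_ge, Rmult_le_pos; auto; apply Rabs_pos).
      right; ring.
Qed.

End LipschitzPaths.

Definition clamp (y : R) : R := Rmin 1 (Rmax 0 y).

Lemma clamp_range y : 0 <= clamp y <= 1.
Proof. unfold clamp, Rmin, Rmax. repeat destruct Rle_dec; lra. Qed.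

Lemma clamp_0 y : y <= 0 -> clamp y = 0.
Proof. intro H. unfold clamp, Rmin, Rmax. repeat destruct Rle_dec; lra. Qed.

Lemma clamp_1 y : 1 <= y -> clamp y = 1.
Proof. intro H. unfold clamp, Rmin, Rmax. repeat destruct Rle_dec; lra. Qed.

Lemma clamp_lipschitz a b : Rabs (clamp a - clamp b) <= Rabs (a - b).
Proof.
  apply Rabs_le. pose proof (Rabs_le_between (a - b) (Rabs (a - b))) as [H _].
  specialize (H (Rle_refl _)). unfold clamp, Rmin, Rmax. repeat destruct Rle_dec; lra.
Qed.

Lemma clamp5_lipschitz a b c : Rabs (clamp (5 * a - c) - clamp (5 * b - c)) <= 5 * Rabs (a - b).
Proof.
  eapply Rle_trans; [apply clamp_lipschitz|].
  replace (5 * a - c - (5 * b - c)) with (5 * (a - b)) by ring.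
  rewrite Rabs_mult, (Rabs_right 5) by lra. lra.
Qed.

(* A path of the horocyclic product, parametrized by [s] in five time slots
   of length 1/5: the height [t] rises from [T] to [M1]; the first component
   moves horizontally and switches tree branch at [s = 3/10]; [t] goes down to
   [m2]; the second component moves horizontally and switches branch at
   [s = 7/10]; finally [t] moves to [T'].  The first tree component has height
   [-t], so its branch switch happens at height [-M1], the second one at [m2]. *)
Definition zigzag_height (T M1 m2 T' s : R) : R :=
  T + (M1 - T) * clamp (5 * s) - (M1 - m2) * clamp (5 * s - 2) + (T' - m2) * clamp (5 * s - 4).
Definition ramp (X X' c s : R) : R := X + (X' - X) * clamp (5 * s - c).
Definition switch (R1 R2 s0 s : R) : R := if Rlt_dec s s0 then R1 else R2.

Definition zigzag (X1 T R1 X2 R2 X1' T' R1' X2' R2' M1 m2 : R) (s : R) : HP_pt :=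
  HP_point (ramp X1 X1' 1 s) (zigzag_height T M1 m2 T' s) (switch R1 R1' (3/10) s)
           (ramp X2 X2' 3 s) (switch R2 R2' (7/10) s).

Lemma ramp_lipschitz X X' c a b : Rabs (ramp X X' c a - ramp X X' c b) <= 5 * Rabs (X' - X) * Rabs (a - b).
Proof.
  unfold ramp. replace (X + (X' - X) * clamp (5 * a - c) - (X + (X' - X) * clamp (5 * b - c)))
    with ((X' - X) * (clamp (5 * a - c) - clamp (5 * b - c))) by ring.
  rewrite Rabs_mult. pose proof (clamp5_lipschitz a b c). pose proof (Rabs_pos (X' - X)). nra.
Qed.

Section Zigzag.

Variable p : Z.
Hypothesis Hp : prime p.
Variables X1 T R1 X2 R2 X1' T' R1' X2' R2' M1 m2 : R.
Variables K1 K2 : Z.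
Hypothesis HT : m2 <= T <= M1.
Hypothesis HT' : m2 <= T' <= M1.
Hypothesis HR1 : in_Zinvp p R1.
Hypothesis HR1' : in_Zinvp p R1'.
Hypothesis HR2 : in_Zinvp p R2.
Hypothesis HR2' : in_Zinvp p R2'.
Hypothesis HK1 : in_pkZ p K1 (R1 - R1').
Hypothesis HK1M : - M1 <= IZR K1.
Hypothesis HK2 : in_pkZ p K2 (R2 - R2').
Hypothesis HK2m : m2 <= IZR K2.

Let z := zigzag X1 T R1 X2 R2 X1' T' R1' X2' R2' M1 m2.
Let height := zigzag_height T M1 m2 T'.

Definition zigzag_speed : R := 5 * (Rabs (M1 - T) + Rabs (M1 - m2) + Rabs (T' - m2)).

Definition zigzag_lip1 : R :=
  H2_lip_const p (5 * Rabs (X1' - X1)) zigzag_speed (ppow p (m2 - (M1 - m2))) (ppow p (M1 + (M1 - m2))).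
Definition zigzag_lip2 : R :=
  H2_lip_const p (5 * Rabs (X2' - X2)) zigzag_speed (ppow p (- (M1 + (M1 - m2))))
    (ppow p (- (m2 - (M1 - m2)))).

Lemma zigzag_lip1_nonneg : 0 <= zigzag_lip1.
Proof. apply H2_lip_const_nonneg; [exact Hp|apply ppow_pos]. Qed.

Lemma zigzag_lip2_nonneg : 0 <= zigzag_lip2.
Proof. apply H2_lip_const_nonneg; [exact Hp|apply ppow_pos]. Qed.

Lemma zigzag_0 : z 0 = HP_point X1 T R1 X2 R2.
Proof.
  unfold z, zigzag, HP_point, zigzag_height, ramp, switch.
  rewrite !(clamp_0 (5 * 0 - _)), (clamp_0 (5 * 0)) by lra.
  destruct (Rlt_dec 0 (3/10)); [|lra]. destruct (Rlt_dec 0 (7/10)); [|lra].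
  f_equal; f_equal; f_equal; ring.
Qed.

Lemma zigzag_1 : z 1 = HP_point X1' T' R1' X2' R2'.
Proof.
  unfold z, zigzag, HP_point, zigzag_height, ramp, switch.
  rewrite !(clamp_1 (5 * 1 - _)), (clamp_1 (5 * 1)) by lra.
  destruct (Rlt_dec 1 (3/10)); [lra|]. destruct (Rlt_dec 1 (7/10)); [lra|].
  f_equal; f_equal; f_equal; ring.
Qed.

Lemma zigzag_speed_nonneg : 0 <= zigzag_speed.
Proof.
  unfold zigzag_speed. pose proof (Rabs_pos (M1 - T)). pose proof (Rabs_pos (M1 - m2)).
  pose proof (Rabs_pos (T' - m2)). lra.
Qed.

Lemma zigzag_height_lipschitz a b : Rabs (height a - height b) <= zigzag_speed * Rabs (a - b).
Proof.
  unfold height, zigzag_height, zigzag_speed.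
  replace (T + (M1 - T) * clamp (5 * a) - (M1 - m2) * clamp (5 * a - 2) + (T' - m2) * clamp (5 * a - 4) -
    (T + (M1 - T) * clamp (5 * b) - (M1 - m2) * clamp (5 * b - 2) + (T' - m2) * clamp (5 * b - 4)))
  with ((M1 - T) * (clamp (5 * a - 0) - clamp (5 * b - 0))
        + (- (M1 - m2)) * (clamp (5 * a - 2) - clamp (5 * b - 2))
        + (T' - m2) * (clamp (5 * a - 4) - clamp (5 * b - 4)))
    by (rewrite !Rminus_0_r; ring).
  eapply Rle_trans; [apply Rabs_triang|].
  eapply Rle_trans; [apply Rplus_le_compat_r; apply Rabs_triang|].
  rewrite !Rabs_mult, Rabs_Ropp.
  pose proof (clamp5_lipschitz a b 0). pose proof (clamp5_lipschitz a b 2).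
  pose proof (clamp5_lipschitz a b 4).
  pose proof (Rabs_pos (M1 - T)). pose proof (Rabs_pos (M1 - m2)). pose proof (Rabs_pos (T' - m2)).
  nra.
Qed.

Lemma zigzag_height_range s : m2 - (M1 - m2) <= height s <= M1 + (M1 - m2).
Proof.
  unfold height, zigzag_height.
  pose proof (clamp_range (5 * s)). pose proof (clamp_range (5 * s - 2)).
  pose proof (clamp_range (5 * s - 4)). split; nra.
Qed.

Lemma in_HP_zigzag s : 0 <= s <= 1 -> in_HP p (z s).
Proof. intros _. apply in_HP_point; unfold switch; destruct Rlt_dec; auto. Qed.

Lemma zigzag_H2_lipschitz1 a b : 0 <= a <= 1 -> 0 <= b <= 1 ->
  H2_dist p (fst (fst (z a))) (fst (fst (z b))) <= zigzag_lip1 * Rabs (a - b).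
Proof.
  intros Ha Hb. pose proof (zigzag_height_range a). pose proof (zigzag_height_range b).
  apply H2_dist_lipschitz; simpl; auto.
  - apply ppow_pos.
  - split; apply ppow_le; auto; unfold height in *; lra.
  - split; apply ppow_le; auto; unfold height in *; lra.
  - apply ramp_lipschitz.
  - apply zigzag_height_lipschitz.
  - split; [apply Rabs_pos|]. apply Rabs_le_between; lra.
  - apply zigzag_speed_nonneg.
Qed.

Lemma zigzag_H2_lipschitz2 a b : 0 <= a <= 1 -> 0 <= b <= 1 ->
  H2_dist p (fst (snd (z a))) (fst (snd (z b))) <= zigzag_lip2 * Rabs (a - b).
Proof.
  intros Ha Hb. pose proof (zigzag_height_range a). pose proof (zigzag_height_range b).
  apply H2_dist_lipschitz; simpl; auto.
  - apply ppow_pos.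
  - split; apply ppow_le; auto; unfold height in *; lra.
  - split; apply ppow_le; auto; unfold height in *; lra.
  - apply ramp_lipschitz.
  - replace (- zigzag_height T M1 m2 T' a - - zigzag_height T M1 m2 T' b)
      with (- (height a - height b)) by (unfold height; ring).
    rewrite Rabs_Ropp. apply zigzag_height_lipschitz.
  - split; [apply Rabs_pos|]. apply Rabs_le_between; lra.
  - apply zigzag_speed_nonneg.
Qed.

Lemma zigzag_MF_cont1 : MF_cont p (fun s => fst (z s)).
Proof.
  pose proof zigzag_speed_nonneg. split.
  - apply (lipschitz_cont01 _ _ zigzag_lip1 zigzag_lip1_nonneg zigzag_H2_lipschitz1).
  - apply (lipschitz_cont01 _ _ zigzag_speed); auto. intros a b Ha Hb. simpl.
    apply (Tree_path_lipschitz p (fun s => - height s) (switch R1 R1' (3/10))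
             zigzag_speed (3/10) R1 R1' K1); auto; try lra.
    + intros. replace (- height a0 - - height b0) with (- (height a0 - height b0)) by ring.
      rewrite Rabs_Ropp. apply zigzag_height_lipschitz.
    + intros. unfold switch. destruct Rlt_dec; auto; lra.
    + intros. unfold switch. destruct Rlt_dec; auto; lra.
    + unfold height, zigzag_height. rewrite (clamp_1 (5 * (3/10))), (clamp_0 (5 * (3/10) - 2)),
        (clamp_0 (5 * (3/10) - 4)) by lra. lra.
Qed.

Lemma zigzag_MF_cont2 : MF_cont p (fun s => snd (z s)).
Proof.
  pose proof zigzag_speed_nonneg. split.
  - apply (lipschitz_cont01 _ _ zigzag_lip2 zigzag_lip2_nonneg zigzag_H2_lipschitz2).
  - apply (lipschitz_cont01 _ _ zigzag_speed); auto. intros a b Ha Hb. simpl.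
    apply (Tree_path_lipschitz p height (switch R2 R2' (7/10))
             zigzag_speed (7/10) R2 R2' K2); auto; try lra.
    + intros. apply zigzag_height_lipschitz.
    + intros. unfold switch. destruct Rlt_dec; auto; lra.
    + intros. unfold switch. destruct Rlt_dec; auto; lra.
    + unfold height, zigzag_height. rewrite (clamp_1 (5 * (7/10))), (clamp_1 (5 * (7/10) - 2)),
        (clamp_0 (5 * (7/10) - 4)) by lra. lra.
Qed.

Lemma zigzag_HP_admissible N : monotone_norm2 N ->
  admissible_length (in_HP p) (HP_cont p)
    (fun x y => N (MF_dist p (fst x) (fst y)) (MF_dist p (snd x) (snd y)))
    (HP_point X1 T R1 X2 R2) (HP_point X1' T' R1' X2' R2')
    (Rmax zigzag_lip1 zigzag_lip2 * N 1 1).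
Proof.
  intro HN. rewrite <- zigzag_0, <- zigzag_1.
  apply HP_admissible_lipschitz; auto using zigzag_lip1_nonneg, zigzag_lip2_nonneg.
  - apply in_HP_zigzag.
  - apply zigzag_MF_cont1.
  - apply zigzag_MF_cont2.
  - apply zigzag_H2_lipschitz1.
  - apply zigzag_H2_lipschitz2.
Qed.

Lemma zigzag_MF_admissible :
  (exists L, admissible_length (in_MF p) (MF_cont p) (fun x y => H2_dist p (fst x) (fst y))
     (fst (HP_point X1 T R1 X2 R2)) (fst (HP_point X1' T' R1' X2' R2')) L) /\
  (exists L, admissible_length (in_MF p) (MF_cont p) (fun x y => H2_dist p (fst x) (fst y))
     (snd (HP_point X1 T R1 X2 R2)) (snd (HP_point X1' T' R1' X2' R2')) L).
Proof.
  rewrite <- zigzag_0, <- zigzag_1. split; eexists.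
  - apply (MF_admissible_lipschitz p (fun s => fst (z s)) zigzag_lip1); try lra.
    + apply zigzag_lip1_nonneg.
    + intros s Hs. apply in_HP_zigzag; auto.
    + apply zigzag_MF_cont1.
    + apply zigzag_H2_lipschitz1.
  - apply (MF_admissible_lipschitz p (fun s => snd (z s)) zigzag_lip2); try lra.
    + apply zigzag_lip2_nonneg.
    + intros s Hs. apply in_HP_zigzag; auto.
    + apply zigzag_MF_cont2.
    + apply zigzag_H2_lipschitz2.
Qed.

End Zigzag.

Lemma unit_interval_connected (P : R -> Prop) : P 0 ->
  (forall s, 0 <= s <= 1 -> exists del, 0 < del /\
     forall s', 0 <= s' <= 1 -> Rabs (s' - s) < del -> (P s <-> P s')) -> P 1.
Proof.
  intros H0 Hloc.
  set (E := fun x => 0 <= x <= 1 /\ forall y, 0 <= y <= x -> P y).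
  assert (HE0 : E 0) by (split; [lra|]; intros y Hy; replace y with 0 by lra; auto).
  destruct (completeness E) as [sg [Hub Hlub]].
  { exists 1. intros x [Hx _]. lra. }
  { exists 0. exact HE0. }
  assert (Hs0 : 0 <= sg) by (apply Hub, HE0).
  assert (Hs1 : sg <= 1) by (apply Hlub; intros x [Hx _]; lra).
  destruct (Hloc sg (conj Hs0 Hs1)) as [del [Hd Hl]].
  assert (Hx : exists x, E x /\ sg - del < x).
  { apply NNPP. intro H. enough (sg <= sg - del) by lra. apply Hlub. intros x Hx.
    apply Rnot_lt_le. intro Hlt. eauto. }
  destruct Hx as [x [[Hx1 Hx2] Hx3]].
  assert (Hxs : x <= sg) by (apply Hub; split; auto).
  assert (Psg : P sg).
  { apply (Hl x); [lra| rewrite Rabs_left1 by lra; lra|]. apply Hx2; lra. }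
  pose proof (Rmin_l (sg + del / 2) 1). pose proof (Rmin_r (sg + del / 2) 1).
  set (y := Rmin (sg + del / 2) 1) in *.
  assert (Ey : E y).
  { split; [unfold y, Rmin; destruct Rle_dec; lra|]. intros y' Hy'.
    destruct (Rle_dec y' x); [apply Hx2; lra|].
    apply (Hl y'); auto; [lra|]. apply Rabs_def1; lra. }
  assert (y <= sg) by (apply Hub; auto).
  assert (Hy1 : y = 1) by (unfold y in *; unfold Rmin in *; destruct Rle_dec; lra).
  destruct Ey as [_ Ey]. apply Ey. lra.
Qed.

Section Connectedness.

Variable p : Z.
Hypothesis Hp : prime p.

Lemma HP_connected N z z' : monotone_norm2 N -> in_HP p z -> in_HP p z' ->
  (exists L, admissible_length (in_HP p) (HP_cont p)
     (fun x y => N (MF_dist p (fst x) (fst y)) (MF_dist p (snd x) (snd y))) z z' L) /\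
  (exists L, admissible_length (in_MF p) (MF_cont p) (fun x y => H2_dist p (fst x) (fst y))
     (fst z) (fst z') L) /\
  (exists L, admissible_length (in_MF p) (MF_cont p) (fun x y => H2_dist p (fst x) (fst y))
     (snd z) (snd z') L).
Proof.
  intros HN Hz Hz'.
  destruct (in_HP_inv p z Hz) as (X1 & T & R1 & X2 & R2 & -> & Z1 & Z2).
  destruct (in_HP_inv p z' Hz') as (X1' & T' & R1' & X2' & R2' & -> & Z1' & Z2').
  destruct (in_Zinvp_sub_pkZ p Hp R1 R1' Z1 Z1') as [K1 HK1].
  destruct (in_Zinvp_sub_pkZ p Hp R2 R2' Z2 Z2') as [K2 HK2].
  pose proof (Rmax_l (Rmax T T') (- IZR K1)). pose proof (Rmax_r (Rmax T T') (- IZR K1)).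
  pose proof (Rmax_l T T'). pose proof (Rmax_r T T').
  pose proof (Rmin_l (Rmin T T') (IZR K2)). pose proof (Rmin_r (Rmin T T') (IZR K2)).
  pose proof (Rmin_l T T'). pose proof (Rmin_r T T').
  set (M1 := Rmax (Rmax T T') (- IZR K1)) in *.
  set (m2 := Rmin (Rmin T T') (IZR K2)) in *.
  split; [eexists; apply (zigzag_HP_admissible p Hp _ _ _ _ _ _ _ R1' _ R2' M1 m2 K1 K2)
         |apply (zigzag_MF_admissible p Hp _ _ _ _ _ _ _ R1' _ R2' M1 m2 K1 K2)];
    auto; lra.
Qed.

(* A continuous path can only leave a class modulo [p^K Z] through a point of
   tree height [<= K]. *)
Lemma MF_path_tree_congr g (K : Z) :
  (forall s, 0 <= s <= 1 -> in_MF p (g s)) -> MF_cont p g ->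
  (forall s, 0 <= s <= 1 -> IZR K < fst (snd (g s))) ->
  in_pkZ p K (snd (snd (g 1)) - snd (snd (g 0))).
Proof.
  intros Hin [_ C2] Hh.
  apply (unit_interval_connected (fun s => in_pkZ p K (snd (snd (g s)) - snd (snd (g 0))))).
  - rewrite Rminus_diag. apply in_pkZ_0.
  - intros s Hs. destruct (C2 s Hs (fst (snd (g s)) - IZR K)) as [del [Hd Hc]];
      [pose proof (Hh s Hs); lra|].
    exists del. split; auto. intros s' Hs' Hss. specialize (Hc s' Hs' Hss).
    destruct (Hin s Hs) as [T1 _]. destruct (Hin s' Hs') as [T2 _].
    destruct (in_Zinvp_sub_pkZ p Hp _ _ T1 T2) as [K0 HK0].
    pose proof (Hh s Hs) as Hhs. pose proof (Hh s' Hs') as Hhs'.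
    assert (Hm : IZR K < Tree_meet p (snd (g s)) (snd (g s'))) by (unfold Tree_dist in Hc; lra).
    destruct (Tree_meet_gt p _ _ K0 (IZR K) HK0 Hm) as [k [Hk1 Hk2]].
    apply lt_IZR in Hk1.
    assert (HK : in_pkZ p K (snd (snd (g s)) - snd (snd (g s'))))
      by (apply (in_pkZ_weaken p Hp K k); auto; lia).
    split; intro H.
    + replace (snd (snd (g s')) - snd (snd (g 0))) with
        ((snd (snd (g s)) - snd (snd (g 0))) - (snd (snd (g s)) - snd (snd (g s')))) by ring.
      apply in_pkZ_sub; auto.
    + replace (snd (snd (g s)) - snd (snd (g 0))) with
        ((snd (snd (g s')) - snd (snd (g 0))) + (snd (snd (g s)) - snd (snd (g s')))) by ring.
      apply in_pkZ_add; auto.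
Qed.

(* How far the height can move along a path of [H^2_p]-length [D]. *)
Definition height_drift (D : R) : R := ln (2 * exp (lnp p * D) + 2) / lnp p.

Lemma MF_dist_ball a b D : in_MF p a -> in_MF p b ->
  (exists L, admissible_length (in_MF p) (MF_cont p) (fun x y => H2_dist p (fst x) (fst y)) a b L) ->
  MF_dist p a b <= D ->
  H2_dist p (fst a) (fst b) <= D + 1 /\
  in_pkZ p (up (fst (snd a) - height_drift (D + 1)) - 2) (snd (snd b) - snd (snd a)).
Proof.
  intros Ha Hb Hne HD.
  destruct (path_dist_approx _ _ _ a b 1 Hne ltac:(lra)) as [L [[g (G0 & G1 & Gin & Gc & Gl)] HL]].
  fold (MF_dist p a b) in HL.
  pose proof (path_length_le_endpoints _ g L Gl) as H01. rewrite G0, G1 in H01.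
  split; [lra|].
  rewrite <- G0, <- G1. apply MF_path_tree_congr; auto.
  intros s Hs. pose proof (path_length_le_through _ g L s Hs Gl) as H0s.
  pose proof (H2_dist_nonneg p Hp (fst (g s)) (fst (g 1))).
  assert (Hd : H2_dist p (fst (g 0)) (fst (g s)) <= D + 1) by lra.
  pose proof (H2_height_bound p Hp _ _ _ Hd) as Ht. fold (height_drift (D + 1)) in Ht.
  apply Rabs_le_between in Ht.
  destruct (Gin s Hs) as [_ Bs]. destruct (Gin 0 ltac:(lra)) as [_ B0].
  unfold H2_beta, Tree_beta in Bs, B0.
  pose proof (up_le (fst (snd (g 0)) - height_drift (D + 1))).
  rewrite minus_IZR. simpl. lra.
Qed.

Lemma HP_dist_ball N x y r : monotone_norm2 N -> in_HP p x -> in_HP p y ->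
  HP_dist p N x y <= r ->
  MF_dist p (fst x) (fst y) * N 1 0 <= r + 1 /\ MF_dist p (snd x) (snd y) * N 0 1 <= r + 1.
Proof.
  intros HN Hx Hy Hr.
  destruct (HP_connected N x y HN Hx Hy) as [Hne _].
  destruct (path_dist_approx _ _ _ x y 1 Hne ltac:(lra)) as [L [[g (G0 & G1 & _ & _ & Gl)] HL]].
  fold (HP_dist p N x y) in HL.
  pose proof (path_length_le_endpoints _ g L Gl) as H01. rewrite G0, G1 in H01. simpl in H01.
  pose proof (path_dist_nonneg (in_MF p) (MF_cont p) (fun x y => H2_dist p (fst x) (fst y)) (fst x) (fst y)).
  pose proof (path_dist_nonneg (in_MF p) (MF_cont p) (fun x y => H2_dist p (fst x) (fst y)) (snd x) (snd y)).
  pose proof (monotone_norm2_ge_l N HN _ _ H H0). pose proof (monotone_norm2_ge_r N HN _ _ H H0).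
  fold (MF_dist p (fst x) (fst y)) (MF_dist p (snd x) (snd y)) in *. split; lra.
Qed.

End Connectedness.

Lemma Rabs_le_sqrt_div u d Q : 0 < u -> u ^ 2 * d ^ 2 <= Q -> Rabs d <= sqrt Q / u.
Proof.
  intros Hu H. apply Rle_div_r; auto.
  rewrite <- (sqrt_square (Rabs d * u)) by (apply Rmult_le_pos; [apply Rabs_pos|lra]).
  apply sqrt_le_1_alt. replace (Rabs d * u * (Rabs d * u)) with (u ^ 2 * Rabs d ^ 2) by ring.
  rewrite pow2_abs. auto.
Qed.

Lemma translation_bound xi X w q Q B :
  Rabs (xi - X) <= B -> Rabs (xi - (q * X + w)) <= B -> 0 < q <= Q ->
  Rabs w <= B + Rabs xi + Q * (Rabs xi + B).
Proof.
  intros H1 H2 Hq.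
  assert (HX : Rabs X <= Rabs xi + B).
  { replace X with (xi + - (xi - X)) by ring. eapply Rle_trans; [apply Rabs_triang|].
    rewrite Rabs_Ropp. lra. }
  replace w with (- (xi - (q * X + w)) + xi - q * X) by ring.
  eapply Rle_trans; [apply Rabs_triang|]. eapply Rle_trans; [apply Rplus_le_compat_r, Rabs_triang|].
  rewrite !Rabs_Ropp, Rabs_mult, (Rabs_right q) by lra.
  pose proof (Rabs_pos X). assert (q * Rabs X <= Q * (Rabs xi + B)) by (apply Rmult_le_compat; lra).
  lra.
Qed.

Definition Z_range (M : Z) : list Z :=
  map (fun i => (Z.of_nat i - M)%Z) (seq 0 (Z.to_nat (2 * M + 1))).

Lemma in_Z_range M z : (- M <= z <= M)%Z -> In z (Z_range M).
Proof.
  intro H. apply in_map_iff. exists (Z.to_nat (z + M)). split.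
  - rewrite Z2Nat.id by lia. lia.
  - apply in_seq. lia.
Qed.

Lemma up_bound x z : Rabs (IZR z) <= x -> (- up x <= z <= up x)%Z.
Proof.
  intro H. apply Rabs_le_between in H. destruct (archimed x) as [A _].
  assert (IZR z < IZR (up x)) by lra. assert (IZR (- z) < IZR (up x)) by (rewrite opp_IZR; lra).
  apply lt_IZR in H0. apply lt_IZR in H1. lia.
Qed.

Section Properness.

Variable p : Z.
Hypothesis Hp : prime p.

Lemma in_pkZ_translation K J N0 s R rho w : in_pkZ p K (R - rho) ->
  in_pkZ p K (powerRZ (IZR p) s * R + w - rho) -> in_pkZ p J rho -> (Z.abs s <= N0)%Z ->
  in_pkZ p (Z.min K J - N0) w.
Proof.
  intros H1 H2 H3 Hs.
  replace w with ((powerRZ (IZR p) s * R + w - rho) - powerRZ (IZR p) s * (R - rho)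
                  + rho - powerRZ (IZR p) s * rho) by ring.
  apply in_pkZ_sub; [apply in_pkZ_add; [apply in_pkZ_sub|]|].
  - apply (in_pkZ_weaken p Hp _ K); auto; lia.
  - apply (in_pkZ_weaken p Hp _ (K + s)); [lia|]. apply in_pkZ_scale; auto.
  - apply (in_pkZ_weaken p Hp _ J); auto; lia.
  - apply (in_pkZ_weaken p Hp _ (J + s)); [lia|]. apply in_pkZ_scale; auto.
Qed.

Lemma in_pkZ_bounded Q w W : in_pkZ p Q w -> Rabs w <= W ->
  exists z, w = IZR z * powerRZ (IZR p) Q /\
    (- up (W / powerRZ (IZR p) Q) <= z <= up (W / powerRZ (IZR p) Q))%Z.
Proof.
  intros [z Hz] HW. exists z. split; auto. apply up_bound.
  pose proof (powerRZ_prime_pos p Hp Q) as HQ. apply Rle_div_r; auto.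
  rewrite <- (Rabs_right (powerRZ (IZR p) Q)) at 1 by lra. rewrite <- Rabs_mult, <- Hz. auto.
Qed.

Definition horizontal_drift (t D : R) : R :=
  sqrt (2 * exp (lnp p * D) * ppow p t * ppow p (t + height_drift p D)) / lnp p.

Lemma MF_ball_coords a b D : in_MF p a -> in_MF p b ->
  (exists L, admissible_length (in_MF p) (MF_cont p) (fun x y => H2_dist p (fst x) (fst y)) a b L) ->
  MF_dist p a b <= D ->
  Rabs (snd (fst a) - snd (fst b)) <= height_drift p (D + 1) /\
  Rabs (fst (fst a) - fst (fst b)) <= horizontal_drift (snd (fst a)) (D + 1) /\
  in_pkZ p (up (fst (snd a) - height_drift p (D + 1)) - 2) (snd (snd b) - snd (snd a)).
Proof.
  intros Ha Hb Hne HD. destruct (MF_dist_ball p Hp a b D Ha Hb Hne HD) as [F G].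
  pose proof (H2_height_bound p Hp _ _ _ F) as Ht. fold (height_drift p (D + 1)) in Ht.
  pose proof (H2_horizontal_bound p Hp _ _ _ F) as Hx.
  split; [|split]; auto.
  apply Rabs_le_sqrt_div; [apply lnp_pos; auto|]. eapply Rle_trans; [apply Hx|].
  apply Rmult_le_compat_l.
  - pose proof (exp_pos (lnp p * (D + 1))). pose proof (ppow_pos p (snd (fst a))). nra.
  - apply ppow_le; auto. apply Rabs_le_between in Ht. lra.
Qed.

Variable N : R -> R -> R.
Hypothesis HN : monotone_norm2 N.
Variables xi1 tau rho1 xi2 rho2 r : R.
Let x := HP_point xi1 tau rho1 xi2 rho2.
Hypothesis Hx : in_HP p x.

Let D1 := (r + 1) / N 1 0.
Let D2 := (r + 1) / N 0 1.
Let C1 := height_drift p (D1 + 1).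
Let C2 := height_drift p (D2 + 1).
Let B1 := horizontal_drift tau (D1 + 1).
Let B2 := horizontal_drift (- tau) (D2 + 1).
Let K1 := (up (- tau - C1) - 2)%Z.
Let K2 := (up (tau - C2) - 2)%Z.

Lemma HP_ball_coords X1 T R1 X2 R2 :
  in_HP p (HP_point X1 T R1 X2 R2) -> HP_dist p N x (HP_point X1 T R1 X2 R2) <= r ->
  Rabs (tau - T) <= C1 /\ Rabs (xi1 - X1) <= B1 /\ in_pkZ p K1 (R1 - rho1) /\
  Rabs (xi2 - X2) <= B2 /\ in_pkZ p K2 (R2 - rho2).
Proof.
  intros Hy Hr.
  pose proof (monotone_norm2_10_pos N HN). pose proof (monotone_norm2_01_pos N HN).
  destruct (HP_dist_ball p Hp N _ _ r HN Hx Hy Hr) as [M1 M2].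
  destruct (HP_connected p Hp N _ _ HN Hx Hy) as (_ & Hne1 & Hne2).
  destruct Hx as (Hx1 & Hx2 & _). destruct Hy as (Hy1 & Hy2 & _).
  destruct (MF_ball_coords _ _ D1 Hx1 Hy1 Hne1) as (A1 & A2 & A3);
    [apply Rle_div_r; auto|].
  destruct (MF_ball_coords _ _ D2 Hx2 Hy2 Hne2) as (_ & A4 & A5);
    [apply Rle_div_r; auto|].
  simpl in *. repeat split; auto.
Qed.

Variables J1 J2 : Z.
Hypothesis HJ1 : in_pkZ p J1 rho1.
Hypothesis HJ2 : in_pkZ p J2 rho2.

Let N0 := Z.abs (up (2 * C1)).
Let Q := Z.min (Z.min K2 J2 - N0) (Z.min K1 J1 - N0).
Let PW := Rpower (IZR p) (2 * C1).
Let W := B1 + Rabs xi1 + PW * (Rabs xi1 + B1) + (B2 + Rabs xi2 + PW * (Rabs xi2 + B2)).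

(* If [g = (P w, n)] moves some point of the [r]-ball around [x] back into it,
   then [n] is bounded and [w] lies in a bounded part of the lattice [p^Q Z^2]. *)
Lemma displacement_bounds w1 w2 n X1 T R1 X2 R2 :
  in_HP p (HP_point X1 T R1 X2 R2) -> HP_dist p N x (HP_point X1 T R1 X2 R2) <= r ->
  let y' := HP_point (powerRZ (IZR p) n * X1 + w1) (T + IZR n)
              (powerRZ (IZR p) (- n) * R1 + w2) (powerRZ (IZR p) (- n) * X2 + w2)
              (powerRZ (IZR p) n * R2 + w1) in
  in_HP p y' -> HP_dist p N x y' <= r ->
  (Z.abs n <= N0)%Z /\ Rabs w1 <= W /\ Rabs w2 <= W /\ in_pkZ p Q w1 /\ in_pkZ p Q w2.
Proof.
  intros Hy Hr y' Hy' Hr'.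
  destruct (HP_ball_coords _ _ _ _ _ Hy Hr) as (A1 & A2 & A3 & A4 & A5).
  destruct (HP_ball_coords _ _ _ _ _ Hy' Hr') as (B1' & B2' & B3' & B4' & B5').
  apply Rabs_le_between in A1. apply Rabs_le_between in B1'.
  assert (HnN : (Z.abs n <= N0)%Z).
  { pose proof (up_bound (2 * C1) n). unfold N0. enough (- up (2 * C1) <= n <= up (2 * C1))%Z by lia.
    apply H. apply Rabs_le_between. lra. }
  assert (Pn : 0 < powerRZ (IZR p) n <= PW).
  { split; [apply powerRZ_prime_pos; auto|].
    rewrite powerRZ_Rpower by (pose proof (IZR_prime_gt1 p Hp); lra).
    apply Rle_Rpower; [pose proof (IZR_prime_gt1 p Hp); lra|lra]. }
  assert (Pmn : 0 < powerRZ (IZR p) (- n) <= PW).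
  { split; [apply powerRZ_prime_pos; auto|].
    rewrite powerRZ_Rpower by (pose proof (IZR_prime_gt1 p Hp); lra).
    apply Rle_Rpower; [pose proof (IZR_prime_gt1 p Hp); lra|rewrite opp_IZR; lra]. }
  pose proof (Rabs_pos xi1). pose proof (Rabs_pos xi2).
  pose proof (Rabs_pos (xi1 - X1)). pose proof (Rabs_pos (xi2 - X2)).
  pose proof (translation_bound xi1 X1 w1 _ _ B1 A2 B2' Pn).
  pose proof (translation_bound xi2 X2 w2 _ _ B2 A4 B4' Pmn).
  assert (0 <= PW * (Rabs xi1 + B1)) by (apply Rmult_le_pos; lra).
  assert (0 <= PW * (Rabs xi2 + B2)) by (apply Rmult_le_pos; lra).
  repeat split; auto; try (unfold W; lra).
  - apply (in_pkZ_weaken p Hp _ (Z.min K2 J2 - N0)); [unfold Q; lia|].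
    apply (in_pkZ_translation K2 J2 N0 n R2 rho2); auto.
  - apply (in_pkZ_weaken p Hp _ (Z.min K1 J1 - N0)); [unfold Q; lia|].
    apply (in_pkZ_translation K1 J1 N0 (- n) R1 rho1); auto. lia.
Qed.

Variable P : mat2.
Hypothesis HP : in_GL2_Zinvp p P.

Lemma Gp_act_proper_at :
  exists lg : list Gp_elt, forall g, in_Gp p g ->
    (exists y, in_HP p y /\ HP_dist p N x y <= r /\ HP_dist p N x (Gp_act p P g y) <= r) ->
    In g lg.
Proof.
  set (Z0 := up (W / powerRZ (IZR p) Q)).
  exists (flat_map (fun n => flat_map (fun z1 => map (fun z2 =>
            (mapply P (IZR z1 * powerRZ (IZR p) Q, IZR z2 * powerRZ (IZR p) Q), n))
            (Z_range Z0)) (Z_range Z0)) (Z_range N0)).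
  intros [v n] [G1 G2] (y & Hy & Hxy & Hxgy). simpl in G1, G2.
  destruct (in_HP_inv p y Hy) as (X1 & T & R1 & X2 & R2 & -> & _).
  set (w := mapply (minv P) v).
  destruct (in_Zinvp_mapply_minv p Hp P HP v G1 G2) as [Zw1 Zw2]. fold w in Zw1, Zw2.
  rewrite (Gp_act_point p P v n) in Hxgy. fold w in Hxgy.
  assert (Hgy := in_HP_Gp_act p Hp P HP (v, n) _ (conj G1 G2) Hy).
  rewrite (Gp_act_point p P v n) in Hgy. fold w in Hgy.
  destruct (displacement_bounds (fst w) (snd w) n X1 T R1 X2 R2 Hy Hxy Hgy Hxgy)
    as (Hn & Hw1 & Hw2 & Tw1 & Tw2).
  destruct (in_pkZ_bounded Q _ W Tw1 Hw1) as (z1 & Ez1 & Bz1).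
  destruct (in_pkZ_bounded Q _ W Tw2 Hw2) as (z2 & Ez2 & Bz2).
  apply in_flat_map. exists n. split; [apply in_Z_range; lia|].
  apply in_flat_map. exists z1. split; [apply in_Z_range; fold Z0 in Bz1; lia|].
  apply in_map_iff. exists z2. split; [|apply in_Z_range; fold Z0 in Bz2; lia].
  rewrite <- Ez1, <- Ez2, <- surjective_pairing. unfold w.
  rewrite mapply_minvKV; auto. apply HP.
Qed.

End Properness.

Lemma Gp_act_properly_discontinuous p N P : prime p -> monotone_norm2 N -> in_GL2_Zinvp p P ->
  forall x r, in_HP p x -> exists lg : list Gp_elt, forall g, in_Gp p g ->
    (exists y, in_HP p y /\ HP_dist p N x y <= r /\ HP_dist p N x (Gp_act p P g y) <= r) ->
    In g lg.
Proof.
  intros Hp HN HP x r Hx.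
  destruct (in_HP_inv p x Hx) as (xi1 & tau & rho1 & xi2 & rho2 & -> & Zr1 & Zr2).
  apply in_Zinvp_iff_pkZ in Zr1, Zr2; auto.
  destruct Zr1 as [J1 HJ1]. destruct Zr2 as [J2 HJ2].
  eapply Gp_act_proper_at; eauto.
Qed.

Section Coboundedness.

Variable p : Z.
Hypothesis Hp : prime p.

(* The Lipschitz constant is invariant under the rescaling [(x, p^t) -> (Y x, Y p^t)]. *)
Lemma H2_lip_const_rescale al be Y c1 c2 a b : 0 < Y -> 0 < c1 -> 0 <= c2 ->
  0 <= al <= a * Y -> 0 <= be <= b ->
  H2_lip_const p al be (c1 * Y) (c2 * Y) <= H2_lip_const p a b c1 c2.
Proof.
  intros HY Hc1 Hc2 Hal Hbe. unfold H2_lip_const. pose proof (lnp_pos p Hp).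
  apply Rmult_le_compat_l; [left; apply Rinv_0_lt_compat; auto|].
  apply arcosh_bound_le. split; [apply H2_lip_w_nonneg; nra|].
  unfold H2_lip_w.
  assert (Ha2 : al ^ 2 <= (a * Y) ^ 2) by (apply pow_maj_Rabs; rewrite Rabs_right; lra).
  assert (Hb2 : be ^ 2 <= b ^ 2) by (apply pow_maj_Rabs; rewrite Rabs_right; lra).
  pose proof (pow2_ge_0 (lnp p)) as Hu.
  replace ((lnp p ^ 2 * al ^ 2 + (lnp p * (c2 * Y) * be) ^ 2) / (2 * (c1 * Y) ^ 2))
    with ((lnp p ^ 2 * al ^ 2 + (lnp p * (c2 * Y) * be) ^ 2) / Y ^ 2 / (2 * c1 ^ 2))
    by (field; lra).
  unfold Rdiv at 1 3. apply Rmult_le_compat_r; [left; apply Rinv_0_lt_compat; nra|].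
  apply Rle_div_l; [nra|].
  assert (lnp p ^ 2 * al ^ 2 <= lnp p ^ 2 * (a * Y) ^ 2) by (apply Rmult_le_compat_l; auto).
  assert ((lnp p * (c2 * Y) * be) ^ 2 <= (lnp p * c2 * Y) ^ 2 * b ^ 2).
  { replace ((lnp p * (c2 * Y) * be) ^ 2) with ((lnp p * c2 * Y) ^ 2 * be ^ 2) by ring.
    apply Rmult_le_compat_l; auto. apply pow2_ge_0. }
  nra.
Qed.

Lemma lattice_approx K X R : exists j : Z, Rabs (X - (R + powerRZ (IZR p) K * IZR j)) <= powerRZ (IZR p) K.
Proof.
  pose proof (powerRZ_prime_pos p Hp K) as HK.
  set (y := (X - R) / powerRZ (IZR p) K). exists (up y - 1)%Z.
  destruct (archimed y) as [U1 U2]. rewrite minus_IZR.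
  replace (X - (R + powerRZ (IZR p) K * (IZR (up y) - 1)))
    with (powerRZ (IZR p) K * (y - (IZR (up y) - 1))) by (unfold y; field; lra).
  rewrite Rabs_mult, !Rabs_right by lra. nra.
Qed.

Lemma floor_exists T : exists n : Z, IZR n <= T < IZR n + 1.
Proof. exists (up T - 1)%Z. rewrite minus_IZR. destruct (archimed T). lra. Qed.

(* Within one unit of height, a point [HP_point X1 T R1 X2 R2] is joined to the
   orbit point [HP_point w1 n w2 w2 w1] by a zigzag of bounded length, once
   [w1] and [w2] approximate [X1] and [X2] at the scale of the branching. *)
Lemma zigzag_lip_bound X X' T n c :
  IZR n <= T < IZR n + 1 -> Rabs (X' - X) <= ppow p (-1) * ppow p (c * IZR n) ->
  H2_lip_const p (5 * Rabs (X' - X))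
    (5 * (Rabs (IZR n + 1 - T) + Rabs (IZR n + 1 - (IZR n - 1)) + Rabs (IZR n - (IZR n - 1))))
    (ppow p (-3 + c * IZR n)) (ppow p (3 + c * IZR n))
  <= H2_lip_const p (5 * ppow p (-1)) 20 (ppow p (-3)) (ppow p 3).
Proof.
  intros Hn HX. rewrite !ppow_plus.
  apply H2_lip_const_rescale; try apply ppow_pos; try (left; apply ppow_pos).
  - split; [pose proof (Rabs_pos (X' - X)); lra|]. lra.
  - replace (IZR n + 1 - (IZR n - 1)) with 2 by ring. replace (IZR n - (IZR n - 1)) with 1 by ring.
    rewrite !Rabs_right by lra. lra.
Qed.

Lemma Gp_act_cobounded N P : monotone_norm2 N -> in_GL2_Zinvp p P ->
  let x0 := HP_point 0 0 0 0 0 in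
  in_HP p x0 /\
  forall y, in_HP p y -> exists g, in_Gp p g /\
    HP_dist p N y (Gp_act p P g x0) <=
    H2_lip_const p (5 * ppow p (-1)) 20 (ppow p (-3)) (ppow p 3) * N 1 1.
Proof.
  intros HN HP x0. assert (Z0 : in_Zinvp p 0) by apply (in_Zinvp_IZR p 0).
  split; [apply in_HP_point; auto|].
  intros y Hy. destruct (in_HP_inv p y Hy) as (X1 & T & R1 & X2 & R2 & -> & ZR1 & ZR2).
  destruct (floor_exists T) as [n Hn].
  destruct (lattice_approx (n - 1) X1 R2) as [j1 Hj1].
  destruct (lattice_approx (- n - 1) X2 R1) as [j2 Hj2].
  set (w1 := R2 + powerRZ (IZR p) (n - 1) * IZR j1) in *.
  set (w2 := R1 + powerRZ (IZR p) (- n - 1) * IZR j2) in *.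
  assert (Zw1 : in_Zinvp p w1) by (apply in_Zinvp_add, in_Zinvp_mul; auto using in_Zinvp_pow, in_Zinvp_IZR).
  assert (Zw2 : in_Zinvp p w2) by (apply in_Zinvp_add, in_Zinvp_mul; auto using in_Zinvp_pow, in_Zinvp_IZR).
  exists (mapply P (w1, w2), n). split; [apply (in_Zinvp_mapply p Hp P HP (w1, w2)); auto|].
  assert (Eg : Gp_act p P (mapply P (w1, w2), n) x0 = HP_point w1 (IZR n) w2 w2 w1).
  { unfold x0. rewrite Gp_act_point, mapply_minvK by apply HP. simpl.
    unfold HP_point. repeat f_equal; ring. }
  rewrite Eg. eapply Rle_trans.
  { apply path_dist_le.
    apply (zigzag_HP_admissible p Hp X1 T R1 X2 R2 w1 (IZR n) w2 w2 w1 (IZR n + 1) (IZR n - 1)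
             (- n - 1) (n - 1)); auto; try rewrite minus_IZR; try rewrite opp_IZR; try lra.
    - exists (- j2)%Z. unfold w2. rewrite opp_IZR. ring.
    - exists (- j1)%Z. unfold w1. rewrite opp_IZR. ring. }
  apply Rmult_le_compat_r; [apply monotone_norm2_nonneg; auto|].
  unfold zigzag_lip1, zigzag_lip2, zigzag_speed. apply Rmax_lub.
  - replace (IZR n - 1 - (IZR n + 1 - (IZR n - 1))) with (-3 + 1 * IZR n) by ring.
    replace (IZR n + 1 + (IZR n + 1 - (IZR n - 1))) with (3 + 1 * IZR n) by ring.
    apply zigzag_lip_bound; auto. rewrite Rabs_minus_sym. eapply Rle_trans; [exact Hj1|].
    right. rewrite powerRZ_ppow, <- ppow_plus, minus_IZR by auto. f_equal. ring.
  - replace (- (IZR n + 1 + (IZR n + 1 - (IZR n - 1)))) with (-3 + -1 * IZR n) by ring.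
    replace (- (IZR n - 1 - (IZR n + 1 - (IZR n - 1)))) with (3 + -1 * IZR n) by ring.
    apply zigzag_lip_bound; auto. rewrite Rabs_minus_sym. eapply Rle_trans; [exact Hj2|].
    right. rewrite powerRZ_ppow, <- ppow_plus, minus_IZR, opp_IZR by auto. f_equal. ring.
Qed.

End Coboundedness.

Theorem mainTheorem16 :
  forall (p : Z) (A : mat2),
    prime p ->
    in_GL2_Zinvp p A ->
    conj_to_diag_p p A ->
    forall N : R -> R -> R, monotone_norm2 N ->
    exists act : Gp_elt -> HP_pt -> HP_pt,
      geometric_action (in_Gp p) (Gp_mul A) Gp_one (in_HP p) (HP_dist p N) act.
Proof.
  (* [A] lies in [GL_2(Z[1/p])] automatically, being conjugate to [diag(p, 1/p)]. *)
  intros p A Hp _ [P [HP ->]] N HN. exists (Gp_act p P).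
  split; [|split; [|split; [|split; [|split]]]].
  - intros g x Hg Hx. apply in_HP_Gp_act; auto.
  - intros x Hx. rewrite Gp_act_one. apply HP_dist_refl; auto. apply HN.
  - intros g h x Hg Hh Hx. fold (mconj P (diag_p p)). rewrite Gp_act_mul by auto.
    apply HP_dist_refl; [apply HN|]. apply in_HP_Gp_act; auto. apply in_HP_Gp_act; auto.
  - intros g x y Hg _ _. apply Gp_act_isometry; auto.
  - apply Gp_act_properly_discontinuous; auto.
  - destruct (Gp_act_cobounded p Hp N P HN HP) as [Hx0 Hcob]. eauto.
Qed.
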